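(* Fix $0<\beta<1$. For every general channel $\mathbf W$, every sequence of cost functions $\mathbf c=\{c_n\}$ and every $K$ with $\mathcal X_{n,c,K}\ne\emptyset$ for all $n$, and all reals $R_1,R_2$, \[ C_p(R_2,R_1\mid\mathbf W,\mathbf c,K)=\inf_{\mathbf P\in\mathcal P_{c,K}}\lim_{\gamma\downarrow0}I_p(R_2-\gamma,R_1\mid\mathbf P,\mathbf W)=\inf_{\mathbf P\in\mathcal P_{c,K}}\sup_{\mathbf Q}\lim_{\gamma\downarrow0}J_p(R_2-\gamma,R_1\mid\mathbf P,\mathbf Q,\mathbf W), \] and for every $0\le\epsilon<1$, \[ C(\epsilon,R_1\mid\mathbf W,\mathbf c,K)=\sup_{\mathbf P\in\mathcal P_{c,K}}I(\epsilon,R_1\mid\mathbf P,\mathbf W)=\sup_{\mathbf P\in\mathcal P_{c,K}}\inf_{\mathbf Q}J(\epsilon,R_1\mid\mathbf P,\mathbf Q,\mathbf W). \]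
   Context: A general channel $\mathbf W=\{W^n\}$: finite (or countable) sets $\mathcal X_n,\mathcal Y_n$, distributions $W^n_x$ on $\mathcal Y_n$. $c_n:\mathcal X_n\to\mathbb R$; $\mathcal X_{n,c,K}=\{x\in\mathcal X_n:c_n(x)\le nK\}$. $\mathcal P_{c,K}$ is the set of sequences $\mathbf P=\{P^n\}$ of distributions on $\mathcal X_n$ with $\mathrm{supp}(P^n)\subset\mathcal X_{n,c,K}$; $\mathbf Q=\{Q^n\}$ ranges over sequences of distributions on $\mathcal Y_n$; $W^n_{P^n}=\sum_xP^n(x)W^n_x$; logs natural. $I_p(R_2,R_1|\mathbf P,\mathbf W)=\limsup_n\sum_xP^n(x)W^n_x\{\frac1{n^\beta}(\log\frac{W^n_x(y)}{W^n_{P^n}(y)}-nR_1)<R_2\}$, $I(\epsilon,R_1|\mathbf P,\mathbf W)=\sup\{R_2:I_p(R_2,R_1|\mathbf P,\mathbf W)\le\epsilon\}$; $J_p,J$ are the same with $W^n_{P^n}$ replaced by $Q^n$. A code $\Phi=(N,\phi,\{\mathcal D_i\})$ for $W^n$: $\phi:\{1..N\}\to\mathcal X_n$, disjoint $\mathcal D_i\subset\mathcal Y_n$, $|\Phi|=N$, $\mathrm{supp}(\Phi)=\{\phi(i)\}$, $P_{e,W^n}(\Phi)=\frac1N\sum_i(1-W^n_{\phi(i)}(\mathcal D_i))$. Over code sequences with $\mathrm{supp}(\Phi_n)\subset\mathcal X_{n,c,K}$: $C_p(R_2,R_1|\mathbf W,\mathbf c,K)=\inf\{\limsup_nP_{e,W^n}(\Phi_n):\liminf_n\frac1{n^\beta}(\log|\Phi_n|-nR_1)\ge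 R_2\}$, $C(\epsilon,R_1|\mathbf W,\mathbf c,K)=\sup\{\liminf_n\frac1{n^\beta}(\log|\Phi_n|-nR_1):\limsup_nP_{e,W^n}(\Phi_n)\le\epsilon\}$. *)

From Stdlib Require Import Reals Lra Classical ClassicalEpsilon.
Open Scope R_scope.

Inductive ER : Type := Fin (r : R) | PInf | NInf.

Definition leER (a b : ER) : Prop :=
  match a, b with
  | NInf, _ => True
  | _, PInf => True
  | Fin x, Fin y => x <= y
  | _, _ => False
  end.

(* real part; used only for quantities known to be finite (in [0,1]) *)
Definition to_R (a : ER) : R := match a with Fin r => r | _ => 0 end.

Definition is_lubER (S : ER -> Prop) (a : ER) : Prop :=
  (forall x, S x -> leER x a) /\ (forall b, (forall x, S x -> leER x b) -> leER a b).
Definition is_glbER (S : ER -> Prop) (a : ER) : Prop :=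
  (forall x, S x -> leER a x) /\ (forall b, (forall x, S x -> leER b x) -> leER b a).

Definition supER (S : ER -> Prop) : ER := epsilon (inhabits PInf) (is_lubER S).
Definition infER (S : ER -> Prop) : ER := epsilon (inhabits PInf) (is_glbER S).

Definition limsupER (u : nat -> R) : ER :=
  infER (fun a => exists n, a = supER (fun b => exists k, (n <= k)%nat /\ b = Fin (u k))).
Definition liminfER (u : nat -> R) : ER :=
  supER (fun a => exists n, a = infER (fun b => exists k, (n <= k)%nat /\ b = Fin (u k))).

Definition lim_down0 (g : R -> R) : R :=
  epsilon (inhabits 0) (fun L => forall eps, 0 < eps -> exists delta, 0 < delta /\
     forall gamma, 0 < gamma < delta -> Rabs (g gamma - L) < eps).

(* Alphabets X_n, Y_n are encoded as nat (any finite or countable set embeds). *)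
Definition ssum (f : nat -> R) : R := epsilon (inhabits 0) (fun l => infinite_sum f l).

Fixpoint fsum (N : nat) (f : nat -> R) : R :=
  match N with O => 0 | S m => fsum m f + f m end.

Definition is_dist (p : nat -> R) : Prop := (forall y, 0 <= p y) /\ infinite_sum p 1.

(* a general channel W n x y = W^n_x(y) *)
Definition is_channel (W : nat -> nat -> nat -> R) : Prop := forall n x, is_dist (W n x).

Definition in_cost (c : nat -> nat -> R) (K : R) (n x : nat) : Prop := c n x <= INR n * K.

Definition in_Pc (c : nat -> nat -> R) (K : R) (P : nat -> nat -> R) : Prop :=
  forall n, is_dist (P n) /\ (forall x, P n x <> 0 -> in_cost c K n x).

Definition is_dist_seq (Q : nat -> nat -> R) : Prop := forall n, is_dist (Q n).

Definition outdist (W : nat -> nat -> nat -> R) (P : nat -> nat -> R) (n y : nat) : R :=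
  ssum (fun x => P n x * W n x y).

(* indicator of  (1/n^beta)(log(a/b) - n R1) < R2 ; log(a/0) = +infinity for a > 0 *)
Definition ind_below (beta R1 R2 : R) (n : nat) (a b : R) : R :=
  if Rlt_dec 0 b then
    if Rlt_dec ((ln (a / b) - INR n * R1) / Rpower (INR n) beta) R2 then 1 else 0
  else 0.

Definition prob_below (beta R1 R2 : R) (W : nat -> nat -> nat -> R)
  (P : nat -> nat -> R) (V : nat -> nat -> R) (n : nat) : R :=
  ssum (fun x => P n x * ssum (fun y => W n x y * ind_below beta R1 R2 n (W n x y) (V n y))).

Definition Ip (beta R2 R1 : R) (P : nat -> nat -> R) (W : nat -> nat -> nat -> R) : R :=
  to_R (limsupER (prob_below beta R1 R2 W P (outdist W P))).
Definition Jp (beta R2 R1 : R) (P Q : nat -> nat -> R) (W : nat -> nat -> nat -> R) : R :=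
  to_R (limsupER (prob_below beta R1 R2 W P Q)).

Definition Iinf (beta eps R1 : R) (P : nat -> nat -> R) (W : nat -> nat -> nat -> R) : ER :=
  supER (fun a => exists R2, a = Fin R2 /\ Ip beta R2 R1 P W <= eps).
Definition Jinf (beta eps R1 : R) (P Q : nat -> nat -> R) (W : nat -> nat -> nat -> R) : ER :=
  supER (fun a => exists R2, a = Fin R2 /\ Jp beta R2 R1 P Q W <= eps).

(* messages 0..N-1, encoder phi, decoding sets D i (as boolean predicates on Y_n) *)
Record code : Type := Code { cN : nat; cphi : nat -> nat; cD : nat -> nat -> bool }.

Definition valid_code (c : nat -> nat -> R) (K : R) (n : nat) (F : code) : Prop :=
  (0 < cN F)%nat /\
  (forall i j y, (i < cN F)%nat -> (j < cN F)%nat -> i <> j ->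
       cD F i y = true -> cD F j y = false) /\
  (forall i, (i < cN F)%nat -> in_cost c K n (cphi F i)).

Definition Perr (W : nat -> nat -> nat -> R) (n : nat) (F : code) : R :=
  / INR (cN F) *
  fsum (cN F) (fun i => 1 - ssum (fun y => if cD F i y then W n (cphi F i) y else 0)).

Definition rate2 (beta R1 : R) (n : nat) (F : code) : R :=
  (ln (INR (cN F)) - INR n * R1) / Rpower (INR n) beta.

Definition Cp (beta R2 R1 : R) (W : nat -> nat -> nat -> R) (c : nat -> nat -> R) (K : R) : ER :=
  infER (fun a => exists Phi : nat -> code,
     (forall n, valid_code c K n (Phi n)) /\
     leER (Fin R2) (liminfER (fun n => rate2 beta R1 n (Phi n))) /\
     a = limsupER (fun n => Perr W n (Phi n))).

Definition Ccap (beta eps R1 : R) (W : nat -> nat -> nat -> R) (c : nat -> nat -> R) (K : R) : ER :=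
  supER (fun a => exists Phi : nat -> code,
     (forall n, valid_code c K n (Phi n)) /\
     leER (limsupER (fun n => Perr W n (Phi n))) (Fin eps) /\
     a = liminfER (fun n => rate2 beta R1 n (Phi n))).

From Stdlib Require Import Reals Lra Lia ZArith Classical ClassicalEpsilon FunctionalExtensionality.
Open Scope R_scope.

(* Both formulas follow from two one-shot bounds at every block length n,
   together with a diagonal argument as n -> oo:
   - a Verdu-Han type converse: for any code F and the empirical input
     distribution P^n of its codewords,
       Pr{ density < n R1 + n^beta t } <= Perr(F) + exp(-n^beta (rate2(F) - t));
   - Feinstein's lemma, proved by the greedy choice of codewords: for every
     input distribution P^n there is a code of any size N with
       Perr <= Pr{ density <= log th } + N / th.
   Replacing the output distribution W_P by an arbitrary Q^n only changes the
   spectrum by exp(-n^beta gamma) (change of reference measure), which gives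
   the second form of each formula, with the optimal Q^n being W_P itself. *)

Lemma leER_refl (a : ER) : leER a a.
Proof. destruct a; simpl; auto; lra. Qed.

Lemma leER_trans (a b c : ER) : leER a b -> leER b c -> leER a c.
Proof. destruct a, b, c; simpl; auto; try tauto; lra. Qed.

Lemma leER_antisym (a b : ER) : leER a b -> leER b a -> a = b.
Proof. destruct a, b; simpl; try tauto; intros; f_equal; lra. Qed.

Lemma leER_total (a b : ER) : leER a b \/ leER b a.
Proof. destruct a, b; simpl; auto. lra. Qed.

Lemma lubER_exists (S : ER -> Prop) : exists a, is_lubER S a.
Proof.
  destruct (classic (S PInf)) as [HP|HP].
  { exists PInf; split. intros x _; destruct x; simpl; auto.
    intros b Hb; apply Hb; auto. }
  destruct (classic (exists r, S (Fin r))) as [[r0 Hr0]|HF].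
  - destruct (classic (bound (fun r => S (Fin r)))) as [Hb|Hb].
    + destruct (completeness _ Hb (ex_intro _ r0 Hr0)) as [m [Hm1 Hm2]].
      exists (Fin m); split.
      * intros x Hx; destruct x; simpl; auto; try (apply Hm1; auto); exfalso; apply HP; auto.
      * intros b Hb'; destruct b; simpl; auto.
        -- apply Hm2; intros x Hx; apply (Hb' (Fin x) Hx).
        -- apply (Hb' _ Hr0).
    + exists PInf; split. intros x _; destruct x; simpl; auto.
      intros b Hb'; destruct b; simpl; auto.
      * apply Hb; exists r; intros x Hx; apply (Hb' (Fin x) Hx).
      * apply (Hb' _ Hr0).
  - exists NInf; split.
    + intros x Hx; destruct x; simpl; auto; exfalso; solve [apply HF; eauto | apply HP; auto].
    + intros; simpl; auto.
Qed.

Lemma glbER_exists (S : ER -> Prop) : exists a, is_glbER S a.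
Proof.
  destruct (classic (S NInf)) as [HP|HP].
  { exists NInf; split. intros x _; destruct x; simpl; auto.
    intros b Hb; apply Hb; auto. }
  destruct (classic (exists r, S (Fin r))) as [[r0 Hr0]|HF].
  - set (E := fun r => S (Fin (- r))).
    destruct (classic (bound E)) as [Hb|Hb].
    + assert (HE : exists x, E x) by (exists (- r0); unfold E; rewrite Ropp_involutive; auto).
      destruct (completeness _ Hb HE) as [m [Hm1 Hm2]].
      exists (Fin (- m)); split.
      * intros x Hx; destruct x; simpl; auto.
        assert (- r <= m) by (apply Hm1; unfold E; rewrite Ropp_involutive; auto). lra.
      * intros b Hb'; destruct b; simpl; auto.
        -- assert (m <= - r) by (apply Hm2; intros x Hx; specialize (Hb' _ Hx); simpl in Hb'; lra). lra.
        -- apply (Hb' _ Hr0).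
    + exists NInf; split. intros x _; destruct x; simpl; auto.
      intros b Hb'; destruct b; simpl; auto.
      * apply Hb; exists (- r); intros x Hx; specialize (Hb' _ Hx); simpl in Hb'; lra.
      * apply (Hb' _ Hr0).
  - exists PInf; split.
    + intros x Hx; destruct x; simpl; auto; exfalso; solve [apply HF; eauto | apply HP; auto].
    + intros b _; destruct b; simpl; auto.
Qed.

Lemma sup_ub (S : ER -> Prop) x : S x -> leER x (supER S).
Proof.
  intros Hx. apply (epsilon_spec _ _ (lubER_exists S)); auto.
Qed.

Lemma sup_least (S : ER -> Prop) b : (forall x, S x -> leER x b) -> leER (supER S) b.
Proof. intros Hb. apply (epsilon_spec _ _ (lubER_exists S)); auto. Qed.

Lemma inf_lb (S : ER -> Prop) x : S x -> leER (infER S) x.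
Proof. intros Hx. apply (epsilon_spec _ _ (glbER_exists S)); auto. Qed.

Lemma inf_greatest (S : ER -> Prop) b : (forall x, S x -> leER b x) -> leER b (infER S).
Proof. intros Hb. apply (epsilon_spec _ _ (glbER_exists S)); auto. Qed.

Lemma leER_Fin_of_margin (x : ER) (a : R) :
  (forall g, 0 < g -> leER x (Fin (a + g))) -> leER x (Fin a).
Proof.
  intros H. destruct x as [y| |]; simpl; auto.
  - destruct (Rle_dec y a); auto. specialize (H ((y - a)/2) ltac:(lra)); simpl in H; lra.
  - apply (H 1); lra.
Qed.

Lemma Fin_leER_of_margin (x : ER) (a : R) :
  (forall g, 0 < g -> leER (Fin (a - g)) x) -> leER (Fin a) x.
Proof.
  intros H. destruct x as [y| |]; simpl; auto.
  - destruct (Rle_dec a y); auto. specialize (H ((a - y)/2) ltac:(lra)); simpl in H; lra.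
  - apply (H 1); lra.
Qed.

Lemma leER_of_approx (a b : ER) :
  (forall r, leER (Fin r) a -> forall g, 0 < g -> leER (Fin (r - g)) b) -> leER a b.
Proof.
  intros H. destruct a as [x| |]; simpl; auto.
  - apply (Fin_leER_of_margin b x), H. apply leER_refl.
  - destruct b as [y| |]; simpl; auto.
    + specialize (H (y + 2) I 1 ltac:(lra)). simpl in H. lra.
    + apply (H 0 I 1); lra.
Qed.

Definition eventually (A : nat -> Prop) : Prop := exists N, forall n, (N <= n)%nat -> A n.

Lemma eventually_and (A B : nat -> Prop) :
  eventually A -> eventually B -> eventually (fun n => A n /\ B n).
Proof. intros [N1 H1] [N2 H2]. exists (max N1 N2). intros; split; [apply H1|apply H2]; lia. Qed.

Lemma eventually_mono (A B : nat -> Prop) :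
  eventually A -> (forall n, A n -> B n) -> eventually B.
Proof. intros [N HN] H. exists N; auto. Qed.

Definition tail_sup (u : nat -> R) (n : nat) : ER :=
  supER (fun b => exists k, (n <= k)%nat /\ b = Fin (u k)).
Definition tail_inf (u : nat -> R) (n : nat) : ER :=
  infER (fun b => exists k, (n <= k)%nat /\ b = Fin (u k)).

Lemma limsup_eventually (u : nat -> R) (a : R) : leER (limsupER u) (Fin a) ->
  forall g, 0 < g -> eventually (fun n => u n <= a + g).
Proof.
  intros H g Hg.
  assert (exists N, leER (tail_sup u N) (Fin (a + g))) as [N HN].
  { apply NNPP; intro C.
    assert (Hge : leER (Fin (a + g)) (limsupER u)).
    { apply inf_greatest. intros x [n ->].
      destruct (leER_total (tail_sup u n) (Fin (a + g))); auto.
      exfalso; apply C; exists n; auto. }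
    pose proof (leER_trans _ _ _ Hge H). simpl in *; lra. }
  exists N; intros n Hn.
  assert (Hun : leER (Fin (u n)) (Fin (a + g))).
  { eapply leER_trans; [|exact HN]. apply sup_ub. exists n; auto. }
  exact Hun.
Qed.

Lemma limsup_le_of_eventually (u : nat -> R) (a : R) :
  (forall g, 0 < g -> eventually (fun n => u n <= a + g)) -> leER (limsupER u) (Fin a).
Proof.
  intros H. apply leER_Fin_of_margin. intros g Hg. destruct (H g Hg) as [N HN].
  eapply leER_trans. apply inf_lb. exists N; reflexivity.
  apply sup_least. intros x [k [Hk ->]]. simpl. auto.
Qed.

Lemma liminf_eventually (u : nat -> R) (a : R) : leER (Fin a) (liminfER u) ->
  forall g, 0 < g -> eventually (fun n => a - g <= u n).
Proof.
  intros H g Hg.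
  assert (exists N, leER (Fin (a - g)) (tail_inf u N)) as [N HN].
  { apply NNPP; intro C.
    assert (Hle : leER (liminfER u) (Fin (a - g))).
    { apply sup_least. intros x [n ->].
      destruct (leER_total (tail_inf u n) (Fin (a - g))); auto.
      exfalso; apply C; exists n; auto. }
    pose proof (leER_trans _ _ _ H Hle). simpl in *; lra. }
  exists N; intros n Hn.
  assert (Hun : leER (Fin (a - g)) (Fin (u n))).
  { eapply leER_trans; [exact HN|]. apply inf_lb. exists n; auto. }
  exact Hun.
Qed.

Lemma liminf_ge_of_eventually (u : nat -> R) (a : R) :
  (forall g, 0 < g -> eventually (fun n => a - g <= u n)) -> leER (Fin a) (liminfER u).
Proof.
  intros H. apply Fin_leER_of_margin. intros g Hg. destruct (H g Hg) as [N HN].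
  eapply leER_trans; [| apply sup_ub; exists N; reflexivity].
  apply inf_greatest. intros x [k [Hk ->]]. simpl. auto.
Qed.

Definition limsupR (u : nat -> R) : R := to_R (limsupER u).

Lemma limsupR_spec (u : nat -> R) (lo hi : R) : (forall n, lo <= u n <= hi) ->
  limsupER u = Fin (limsupR u) /\ lo <= limsupR u <= hi.
Proof.
  intros Hb.
  assert (Hs : forall n, exists q, tail_sup u n = Fin q /\ lo <= q <= hi).
  { intros n.
    assert (H1 : leER (tail_sup u n) (Fin hi)).
    { apply sup_least. intros x [k [_ ->]]. simpl. apply Hb. }
    assert (H2 : leER (Fin (u n)) (tail_sup u n)).
    { apply sup_ub. exists n; auto. }
    destruct (tail_sup u n) as [q| |]; simpl in *; try tauto.
    exists q; split; auto. specialize (Hb n); lra. }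
  assert (H1 : leER (Fin lo) (limsupER u)).
  { apply inf_greatest. intros x [n ->]. destruct (Hs n) as [q [Hq Hq']].
    unfold tail_sup in Hq. rewrite Hq. simpl; lra. }
  assert (H2 : leER (limsupER u) (Fin hi)).
  { eapply leER_trans. apply inf_lb. exists 0%nat; reflexivity.
    destruct (Hs 0%nat) as [q [Hq Hq']]. unfold tail_sup in Hq. rewrite Hq. simpl; lra. }
  unfold limsupR. destruct (limsupER u) as [q| |]; simpl in *; try tauto.
Qed.

Lemma limsupR_eventually (u : nat -> R) (lo hi : R) : (forall n, lo <= u n <= hi) ->
  forall g, 0 < g -> eventually (fun n => u n <= limsupR u + g).
Proof.
  intros H. apply limsup_eventually. rewrite (proj1 (limsupR_spec u lo hi H)). apply leER_refl.
Qed.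

Lemma limsupR_le (u : nat -> R) (lo hi a : R) : (forall n, lo <= u n <= hi) ->
  (forall g, 0 < g -> eventually (fun n => u n <= a + g)) -> limsupR u <= a.
Proof.
  intros H H'. pose proof (limsup_le_of_eventually u a H') as Hle.
  rewrite (proj1 (limsupR_spec u lo hi H)) in Hle. exact Hle.
Qed.

Definition is_lim_down0 (g : R -> R) (L : R) : Prop :=
  forall eps, 0 < eps -> exists delta, 0 < delta /\
     forall gamma, 0 < gamma < delta -> Rabs (g gamma - L) < eps.

Lemma is_lim_down0_unique (g : R -> R) (L1 L2 : R) :
  is_lim_down0 g L1 -> is_lim_down0 g L2 -> L1 = L2.
Proof.
  intros H1 H2. destruct (Req_dec L1 L2) as [|Hne]; auto. exfalso.
  set (e := Rabs (L1 - L2) / 2).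
  assert (He : 0 < e) by (unfold e; assert (0 < Rabs (L1 - L2)) by (apply Rabs_pos_lt; lra); lra).
  destruct (H1 e He) as [d1 [Hd1 H1']]. destruct (H2 e He) as [d2 [Hd2 H2']].
  set (gm := Rmin d1 d2 / 2).
  pose proof (Rmin_l d1 d2). pose proof (Rmin_r d1 d2). pose proof (Rmin_glb_lt d1 d2 0 Hd1 Hd2).
  specialize (H1' gm ltac:(unfold gm; lra)). specialize (H2' gm ltac:(unfold gm; lra)).
  assert (Rabs (L1 - L2) <= Rabs (g gm - L1) + Rabs (g gm - L2)).
  { replace (L1 - L2) with (-(g gm - L1) + (g gm - L2)) by ring.
    eapply Rle_trans. apply Rabs_triang. rewrite Rabs_Ropp. lra. }
  unfold e in *. lra.
Qed.

Lemma lim_down0_monotone (g : R -> R) (B : R) :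
  (forall g1 g2, 0 < g1 <= g2 -> g g2 <= g g1) -> (forall gm, 0 < gm -> g gm <= B) ->
  (forall gm, 0 < gm -> g gm <= lim_down0 g) /\
  (forall b, (forall gm, 0 < gm -> g gm <= b) -> lim_down0 g <= b).
Proof.
  intros Hmono HB.
  set (E := fun v => exists gm, 0 < gm /\ v = g gm).
  assert (Hb : bound E) by (exists B; intros v [gm [Hgm ->]]; auto).
  assert (Hne : exists v, E v) by (exists (g 1); exists 1; split; auto; lra).
  destruct (completeness E Hb Hne) as [s [Hs1 Hs2]].
  assert (Hspec : is_lim_down0 g s).
  { intros eps Heps.
    assert (exists gm, 0 < gm /\ s - eps < g gm) as [g0 [Hg0 Hg0']].
    { apply NNPP; intro C. assert (s <= s - eps); [|lra].
      apply Hs2. intros v [gm [Hgm ->]]. destruct (Rle_dec (g gm) (s - eps)); auto.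
      exfalso; apply C; exists gm; split; auto; lra. }
    exists g0; split; auto. intros gm [Hgm Hgm'].
    assert (g gm <= s) by (apply Hs1; exists gm; auto).
    assert (g g0 <= g gm) by (apply Hmono; lra).
    rewrite Rabs_left1; lra. }
  assert (Heq : lim_down0 g = s).
  { apply (is_lim_down0_unique g); auto. unfold lim_down0.
    apply (epsilon_spec (inhabits 0) (is_lim_down0 g)). exists s; exact Hspec. }
  rewrite Heq. split.
  - intros gm Hgm; apply Hs1; exists gm; auto.
  - intros b Hb'. apply Hs2. intros v [gm [Hgm ->]]; auto.
Qed.

Lemma ssum_eq (f : nat -> R) (l : R) : infinite_sum f l -> ssum f = l.
Proof.
  intros H. unfold ssum. apply (uniqueness_sum f); auto.
  apply (epsilon_spec (inhabits 0) (fun l => infinite_sum f l)). eauto.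
Qed.

Lemma ssum_ext (f g : nat -> R) : (forall x, f x = g x) -> ssum f = ssum g.
Proof. intros H. f_equal. extensionality x; auto. Qed.

Lemma cv_const (c : R) : Un_cv (fun _ => c) c.
Proof. intros e He; exists 0%nat; intros; unfold Rdist; rewrite Rminus_diag, Rabs_R0; lra. Qed.

Lemma isum_plus (f g : nat -> R) (a b : R) : infinite_sum f a -> infinite_sum g b ->
  infinite_sum (fun x => f x + g x) (a + b).
Proof.
  intros Hf Hg. apply (Un_cv_ext (fun n => sum_f_R0 f n + sum_f_R0 g n)).
  intros; rewrite sum_plus; auto. apply CV_plus; auto.
Qed.

Lemma isum_scal (f : nat -> R) (a c : R) :
  infinite_sum f a -> infinite_sum (fun x => c * f x) (c * a).
Proof.
  intros Hf. apply (Un_cv_ext (fun n => c * sum_f_R0 f n)).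
  intros; rewrite scal_sum; apply sum_eq; intros; ring.
  apply CV_mult; auto. apply cv_const.
Qed.

Lemma isum_ext (f g : nat -> R) (l : R) :
  (forall x, f x = g x) -> infinite_sum f l -> infinite_sum g l.
Proof.
  intros E H. apply (Un_cv_ext (fun n => sum_f_R0 f n)); auto.
  intros; apply sum_eq; auto.
Qed.

Lemma isum_le (f g : nat -> R) (a b : R) :
  (forall x, f x <= g x) -> infinite_sum f a -> infinite_sum g b -> a <= b.
Proof.
  intros H Hf Hg. apply (Rle_cv_lim (Un:=fun n => sum_f_R0 f n) (Vn:=fun n => sum_f_R0 g n)); auto.
  intros; apply sum_Rle; auto.
Qed.

Lemma isum_partial (f : nat -> R) (l : R) (n : nat) :
  (forall x, 0 <= f x) -> infinite_sum f l -> sum_f_R0 f n <= l.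
Proof. intros H Hf. apply sum_incr; auto. Qed.

Lemma isum_nonneg (f : nat -> R) (l : R) : (forall x, 0 <= f x) -> infinite_sum f l -> 0 <= l.
Proof. intros H Hf. eapply Rle_trans. apply (cond_pos_sum f 0 H). apply isum_partial; auto. Qed.

Lemma isum_bounded (f : nat -> R) (B : R) : (forall x, 0 <= f x) -> (forall n, sum_f_R0 f n <= B) ->
  exists l, infinite_sum f l /\ l <= B.
Proof.
  intros H HB.
  assert (Hg : Un_growing (fun n => sum_f_R0 f n)).
  { intros n; simpl. pose proof (H (S n)); lra. }
  destruct (growing_cv _ Hg) as [l Hl]. exists B; intros x [n ->]; auto.
  exists l; split; auto.
  apply (Rle_cv_lim (Un:=fun n => sum_f_R0 f n) (Vn:=fun _ => B)); auto. apply cv_const.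
Qed.

Lemma isum_comparison (f g : nat -> R) (b : R) : (forall x, 0 <= f x <= g x) -> infinite_sum g b ->
  exists a, infinite_sum f a /\ 0 <= a <= b.
Proof.
  intros H Hg.
  destruct (isum_bounded f b) as [a [Ha Hab]].
  - intros x; apply H.
  - intros n. eapply Rle_trans; [apply sum_Rle; intros; apply H|].
    apply isum_partial; auto. intros x; pose proof (H x); lra.
  - exists a; repeat split; auto. apply (isum_nonneg f); auto. intros; apply H.
Qed.

Lemma fsum_S_sum (f : nat -> R) (n : nat) : fsum (S n) f = sum_f_R0 f n.
Proof. induction n; simpl in *; auto. ring. rewrite <- IHn. simpl. ring. Qed.

Lemma fsum_ext (N : nat) (f g : nat -> R) :
  (forall i, (i < N)%nat -> f i = g i) -> fsum N f = fsum N g.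
Proof. induction N; simpl; intros; auto. rewrite IHN, H; auto. Qed.

Lemma fsum_le (N : nat) (f g : nat -> R) :
  (forall i, (i < N)%nat -> f i <= g i) -> fsum N f <= fsum N g.
Proof.
  induction N; simpl; intros H; try lra.
  pose proof (IHN (fun i Hi => H i ltac:(lia))). pose proof (H N ltac:(lia)). lra.
Qed.

Lemma fsum_plus (N : nat) (f g : nat -> R) : fsum N (fun i => f i + g i) = fsum N f + fsum N g.
Proof. induction N; simpl; [ring|]. rewrite IHN; ring. Qed.

Lemma fsum_scal (N : nat) (f : nat -> R) (c : R) : fsum N (fun i => c * f i) = c * fsum N f.
Proof. induction N; simpl; [ring|]. rewrite IHN; ring. Qed.

Lemma fsum_const (N : nat) (c : R) : fsum N (fun _ => c) = INR N * c.
Proof. induction N; simpl fsum; [simpl; ring|]. rewrite IHN, S_INR; ring. Qed.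

Lemma fsum_nonneg (N : nat) (f : nat -> R) : (forall i, (i < N)%nat -> 0 <= f i) -> 0 <= fsum N f.
Proof. intros H. pose proof (fsum_le N (fun _ => 0) f H). rewrite fsum_const in H0. lra. Qed.

Lemma fsum_ge_term (N : nat) (f : nat -> R) (j : nat) :
  (forall i, 0 <= f i) -> (j < N)%nat -> f j <= fsum N f.
Proof.
  intros Hf Hj. induction N; [lia|]. simpl.
  destruct (Nat.eq_dec j N) as [->|Hne].
  - pose proof (fsum_nonneg N f (fun i _ => Hf i)). lra.
  - pose proof (IHN ltac:(lia)). pose proof (Hf N). lra.
Qed.

Lemma fsum_disjoint (N : nat) (D : nat -> bool) (v : R) : 0 <= v ->
  (forall i j, (i < N)%nat -> (j < N)%nat -> i <> j -> D i = true -> D j = false) ->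
  fsum N (fun i => if D i then v else 0) <= v.
Proof.
  intros Hv. induction N; intros H; simpl; try lra.
  destruct (D N) eqn:E.
  - rewrite (fsum_ext _ _ (fun _ => 0)). rewrite fsum_const; lra.
    intros i Hi. rewrite (H N i); auto; lia.
  - rewrite Rplus_0_r. apply IHN. intros; apply (H i j); auto; lia.
Qed.

Lemma isum_finite (f : nat -> R) (M : nat) :
  (forall x, (M <= x)%nat -> f x = 0) -> infinite_sum f (fsum M f).
Proof.
  intros H e He. exists M. intros n Hn.
  assert (Hext : forall k, fsum (M + k) f = fsum M f).
  { induction k. rewrite Nat.add_0_r; auto.
    rewrite Nat.add_succ_r. simpl. rewrite IHk, H by lia. ring. }
  rewrite <- fsum_S_sum. replace (S n) with (M + (S n - M))%nat by lia. rewrite Hext.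
  unfold Rdist; rewrite Rminus_diag, Rabs_R0; lra.
Qed.

Lemma isum_fsum (N : nat) (F : nat -> nat -> R) (a : nat -> R) :
  (forall i, (i < N)%nat -> infinite_sum (F i) (a i)) ->
  infinite_sum (fun x => fsum N (fun i => F i x)) (fsum N a).
Proof.
  induction N; intros H; simpl.
  - exact (isum_finite (fun _ => 0) 0 (fun _ _ => eq_refl)).
  - apply isum_plus; auto.
Qed.

Lemma isum_point (a : nat) (v : R) : infinite_sum (fun x => if Nat.eq_dec a x then v else 0) v.
Proof.
  assert (E : fsum (S a) (fun x => if Nat.eq_dec a x then v else 0) = v).
  { simpl. rewrite (fsum_ext a _ (fun _ => 0)). rewrite fsum_const.
    destruct Nat.eq_dec; [|lia]. ring.
    intros i Hi; destruct Nat.eq_dec; [lia|auto]. }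
  pattern v at 2. rewrite <- E. apply isum_finite. intros x Hx; destruct Nat.eq_dec; [lia|auto].
Qed.

Lemma tonelli_le (a : nat -> nat -> R) (A : nat -> R) (S : R) :
  (forall x y, 0 <= a x y) -> (forall x, infinite_sum (a x) (A x)) -> infinite_sum A S ->
  exists B : nat -> R, (forall y, infinite_sum (fun x => a x y) (B y)) /\
    exists T, infinite_sum B T /\ T <= S.
Proof.
  intros Ha HA HS.
  assert (HA0 : forall x, 0 <= A x) by (intros; apply (isum_nonneg (a x)); auto).
  assert (Hcol : forall y, exists b, infinite_sum (fun x => a x y) b).
  { intros y. destruct (isum_bounded (fun x => a x y) S) as [b [Hb _]]; eauto.
    intros n. eapply Rle_trans; [|apply (isum_partial A S n); auto].
    apply sum_Rle; intros. eapply Rle_trans; [|apply (isum_partial (a n0) (A n0) y); auto].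
    destruct y; simpl; auto; try lra. pose proof (cond_pos_sum (a n0) y (Ha n0)). lra. }
  destruct (choice _ Hcol) as [B HB]. exists B; split; auto.
  assert (Hswap : forall N M, sum_f_R0 (fun y => sum_f_R0 (fun x => a x y) N) M
                            = sum_f_R0 (fun x => sum_f_R0 (fun y => a x y) M) N).
  { intros N M. induction M; simpl; auto. rewrite IHM, <- sum_plus. apply sum_eq; intros; simpl; auto. }
  assert (Hfin : forall M, Un_cv (fun N => sum_f_R0 (fun y => sum_f_R0 (fun x => a x y) N) M)
                                 (sum_f_R0 B M)).
  { induction M; simpl; [apply HB|]. apply CV_plus; [exact IHM | apply HB]. }
  apply isum_bounded.
  - intros y; apply (isum_nonneg (fun x => a x y) (B y)); auto.
  - intros M.
    apply (Rle_cv_lim (Un := fun N => sum_f_R0 (fun y => sum_f_R0 (fun x => a x y) N) M)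
                      (Vn := fun _ => S)); [intros N | apply Hfin | apply cv_const].
    rewrite Hswap. eapply Rle_trans; [|apply (isum_partial A S N); auto].
    apply sum_Rle; intros. apply isum_partial; auto.
Qed.

Lemma tonelli (a : nat -> nat -> R) (A : nat -> R) (S : R) :
  (forall x y, 0 <= a x y) -> (forall x, infinite_sum (a x) (A x)) -> infinite_sum A S ->
  exists B : nat -> R, (forall y, infinite_sum (fun x => a x y) (B y)) /\ infinite_sum B S.
Proof.
  intros Ha HA HS.
  destruct (tonelli_le a A S Ha HA HS) as [B [HB [T [HT HTS]]]].
  destruct (tonelli_le (fun y x => a x y) B T) as [A' [HA' [S' [HS' HST]]]]; auto.
  assert (forall x, A' x = A x) by (intros; apply (uniqueness_sum (a x)); auto).
  assert (S' = S). { apply (uniqueness_sum A); auto. apply (isum_ext A'); auto. }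
  exists B; split; auto. replace S with T by lra. auto.
Qed.

Lemma avg_spec (p h : nat -> R) (c : R) : is_dist p -> (forall x, 0 <= h x <= c) ->
  infinite_sum (fun x => p x * h x) (ssum (fun x => p x * h x)) /\
  0 <= ssum (fun x => p x * h x) <= c.
Proof.
  intros [Hp0 Hp1] Hh.
  destruct (isum_comparison (fun x => p x * h x) (fun x => c * p x) (c * 1)) as [a [Ha Ha']].
  - intros x; pose proof (Hp0 x); pose proof (Hh x); split. apply Rmult_le_pos; lra.
    rewrite Rmult_comm. apply Rmult_le_compat_r; lra.
  - apply isum_scal; auto.
  - rewrite (ssum_eq _ a Ha). split; auto. lra.
Qed.

Definition b2r (b : bool) : R := if b then 1 else 0.

Lemma b2r_bounds (b : bool) : 0 <= b2r b <= 1.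
Proof. destruct b; simpl; lra. Qed.

Definition mass (f : nat -> R) (D : nat -> bool) : R := ssum (fun y => if D y then f y else 0).

Lemma mass_spec (f : nat -> R) (D : nat -> bool) : is_dist f ->
  infinite_sum (fun y => if D y then f y else 0) (mass f D) /\ 0 <= mass f D <= 1.
Proof.
  intros Hf. destruct (avg_spec f (fun y => b2r (D y)) 1 Hf (fun y => b2r_bounds _)) as [H1 H2].
  assert (E : forall y, f y * b2r (D y) = if D y then f y else 0)
    by (intros y; unfold b2r; destruct (D y); ring).
  unfold mass. rewrite <- (ssum_ext _ _ E). split; [exact (isum_ext _ _ _ E H1) | exact H2].
Qed.

Definition chan_avg (w h : nat -> nat -> R) (x : nat) : R := ssum (fun y => w x y * h x y).
Definition joint_avg (p : nat -> R) (w h : nat -> nat -> R) : R :=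
  ssum (fun x => p x * chan_avg w h x).

Section Averages.
Variables (p : nat -> R) (w : nat -> nat -> R).
Hypothesis Hp : is_dist p.
Hypothesis Hw : forall x, is_dist (w x).

Lemma chan_avg_spec (h : nat -> nat -> R) (c : R) (x : nat) : (forall y, 0 <= h x y <= c) ->
  infinite_sum (fun y => w x y * h x y) (chan_avg w h x) /\ 0 <= chan_avg w h x <= c.
Proof. intros; apply avg_spec; auto. Qed.

Lemma joint_avg_spec (h : nat -> nat -> R) (c : R) : (forall x y, 0 <= h x y <= c) ->
  infinite_sum (fun x => p x * chan_avg w h x) (joint_avg p w h) /\ 0 <= joint_avg p w h <= c.
Proof. intros Hh. apply avg_spec; auto. intros x. apply (chan_avg_spec h c x); auto. Qed.

Lemma joint_avg_mono (h1 h2 : nat -> nat -> R) (c : R) :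
  (forall x y, 0 <= h1 x y <= c) -> (forall x y, 0 <= h2 x y <= c) ->
  (forall x y, w x y * h1 x y <= w x y * h2 x y) -> joint_avg p w h1 <= joint_avg p w h2.
Proof.
  intros H1 H2 H.
  apply (isum_le (fun x => p x * chan_avg w h1 x) (fun x => p x * chan_avg w h2 x)).
  - intros x. apply Rmult_le_compat_l. apply Hp.
    apply (isum_le (fun y => w x y * h1 x y) (fun y => w x y * h2 x y)); auto;
      apply (chan_avg_spec _ c x); auto.
  - apply (joint_avg_spec h1 c); auto.
  - apply (joint_avg_spec h2 c); auto.
Qed.

Lemma joint_avg_plus (h1 h2 : nat -> nat -> R) (c1 c2 : R) :
  (forall x y, 0 <= h1 x y <= c1) -> (forall x y, 0 <= h2 x y <= c2) ->
  joint_avg p w (fun x y => h1 x y + h2 x y) = joint_avg p w h1 + joint_avg p w h2.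
Proof.
  intros H1 H2.
  assert (H3 : forall x y, 0 <= h1 x y + h2 x y <= c1 + c2)
    by (intros x y; specialize (H1 x y); specialize (H2 x y); lra).
  apply (uniqueness_sum (fun x => p x * chan_avg w (fun x y => h1 x y + h2 x y) x)).
  - apply (joint_avg_spec _ (c1 + c2)); auto.
  - apply (isum_ext (fun x => p x * chan_avg w h1 x + p x * chan_avg w h2 x)).
    + intros x. rewrite <- Rmult_plus_distr_l. f_equal.
      unfold chan_avg at 3. symmetry. apply ssum_eq.
      apply (isum_ext (fun y => w x y * h1 x y + w x y * h2 x y)). intros; ring.
      apply isum_plus. apply (chan_avg_spec h1 c1 x); auto. apply (chan_avg_spec h2 c2 x); auto.
    + apply isum_plus. apply (joint_avg_spec h1 c1); auto. apply (joint_avg_spec h2 c2); auto.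
Qed.

Lemma joint_avg_one : joint_avg p w (fun _ _ => 1) = 1.
Proof.
  apply ssum_eq. apply (isum_ext p); [|apply Hp]. intros x. unfold chan_avg.
  rewrite (ssum_eq _ 1). ring. apply (isum_ext (w x)). intros; ring. apply Hw.
Qed.

Definition outd (y : nat) : R := ssum (fun x => p x * w x y).

Lemma outd_spec :
  (forall y, infinite_sum (fun x => p x * w x y) (outd y)) /\ is_dist outd.
Proof.
  destruct (tonelli (fun x y => p x * w x y) (fun x => p x * 1) 1) as [B [HB HB1]].
  - intros; apply Rmult_le_pos; [apply Hp | apply Hw].
  - intros x; apply isum_scal; apply Hw.
  - apply (isum_ext p). intros; ring. apply Hp.
  - assert (E : forall y, outd y = B y) by (intros; apply ssum_eq; auto).
    split; [intros y; rewrite E; auto|split].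
    + intros y; rewrite E. apply (isum_nonneg (fun x => p x * w x y)); auto.
      intros; apply Rmult_le_pos; [apply Hp | apply Hw].
    + apply (isum_ext B); auto.
Qed.

Lemma joint_avg_output (k : nat -> R) (c : R) : (forall y, 0 <= k y <= c) ->
  joint_avg p w (fun _ y => k y) = ssum (fun y => outd y * k y).
Proof.
  intros Hk.
  destruct outd_spec as [Ho Hod].
  destruct (tonelli (fun x y => p x * (w x y * k y)) (fun x => p x * chan_avg w (fun _ y => k y) x)
              (joint_avg p w (fun _ y => k y))) as [B [HB HB1]].
  - intros; apply Rmult_le_pos; [apply Hp|]. apply Rmult_le_pos; [apply Hw|apply Hk].
  - intros x; apply isum_scal. apply (chan_avg_spec (fun _ y => k y) c x); auto.
  - apply (joint_avg_spec _ c); auto.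
  - symmetry; apply ssum_eq. apply (isum_ext B); auto.
    intros y. apply (uniqueness_sum (fun x => p x * (w x y * k y))); auto.
    apply (isum_ext (fun x => k y * (p x * w x y))). intros; ring.
    rewrite Rmult_comm. apply isum_scal; auto.
Qed.

End Averages.

Lemma npow_pos (n : nat) (beta : R) : 0 < Rpower (INR n) beta.
Proof. unfold Rpower. apply exp_pos. Qed.

Lemma exp_le_exp (x y : R) : x <= y -> exp x <= exp y.
Proof. intros H. destruct (Req_dec x y). subst; lra. left; apply exp_increasing; lra. Qed.

(* [thr t] = exp (n R1 + n^beta t): the likelihood ratio corresponding to the
   normalized density level [t]. *)
Definition thr (beta R1 : R) (n : nat) (t : R) : R := exp (INR n * R1 + Rpower (INR n) beta * t).

Lemma thr_pos beta R1 n t : 0 < thr beta R1 n t.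
Proof. apply exp_pos. Qed.

Lemma thr_shift beta R1 n t d : thr beta R1 n (t + d) = thr beta R1 n t * exp (Rpower (INR n) beta * d).
Proof. unfold thr. rewrite <- exp_plus. f_equal. ring. Qed.

Lemma density_lt_iff beta R1 n t a b : 0 < a -> 0 < b ->
  ((ln (a / b) - INR n * R1) / Rpower (INR n) beta < t <-> a < thr beta R1 n t * b).
Proof.
  intros Ha Hb. pose proof (npow_pos n beta) as Hs.
  set (s := Rpower (INR n) beta) in *.
  replace (ln (a / b)) with (ln a - ln b)
    by (unfold Rdiv; rewrite ln_mult, ln_Rinv; try apply Rinv_0_lt_compat; lra).
  assert (E : thr beta R1 n t * b = exp (INR n * R1 + s * t + ln b))
    by (unfold thr; fold s; rewrite (exp_plus _ (ln b)), exp_ln; auto).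
  rewrite E. split; intros H.
  - rewrite <- (exp_ln a) by lra. apply exp_increasing.
    apply (Rmult_lt_compat_r s) in H; auto.
    unfold Rdiv in H. rewrite Rmult_assoc, Rinv_l, Rmult_1_r in H by lra. lra.
  - rewrite <- (exp_ln a) in H by lra. apply exp_lt_inv in H. apply (Rmult_lt_reg_r s); auto.
    unfold Rdiv. rewrite Rmult_assoc, Rinv_l, Rmult_1_r by lra. lra.
Qed.

Lemma ind_bounds beta R1 t n a b : 0 <= ind_below beta R1 t n a b <= 1.
Proof. unfold ind_below. destruct (Rlt_dec 0 b); [destruct Rlt_dec|]; lra. Qed.

Lemma ind_mono beta R1 t t' n a b : t <= t' ->
  ind_below beta R1 t n a b <= ind_below beta R1 t' n a b.
Proof. unfold ind_below. destruct (Rlt_dec 0 b); [do 2 destruct Rlt_dec|]; lra. Qed.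

Lemma ind_below_nonzero beta R1 t n a b : 0 < a -> ind_below beta R1 t n a b <> 0 ->
  ind_below beta R1 t n a b = 1 /\ 0 < b /\ a < thr beta R1 n t * b.
Proof.
  unfold ind_below. intros Ha. destruct (Rlt_dec 0 b) as [Hb|]; [destruct Rlt_dec as [Hlt|]|];
    intros H; try lra.
  repeat split; auto. apply density_lt_iff; auto.
Qed.

Lemma ind_below_one beta R1 t n a b : 0 < a -> 0 < b -> a < thr beta R1 n t * b ->
  ind_below beta R1 t n a b = 1.
Proof.
  intros Ha Hb H. unfold ind_below. destruct (Rlt_dec 0 b); [|lra].
  destruct Rlt_dec as [|C]; auto. exfalso; apply C, density_lt_iff; auto.
Qed.

Lemma pb_bounds beta R1 t W P V n : is_channel W -> is_dist (P n) ->
  0 <= prob_below beta R1 t W P V n <= 1.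
Proof.
  intros HW HP. apply (joint_avg_spec (P n) (W n) HP (HW n)
    (fun x y => ind_below beta R1 t n (W n x y) (V n y)) 1).
  intros; apply ind_bounds.
Qed.

Lemma pb_mono beta R1 t t' W P V n : is_channel W -> is_dist (P n) -> t <= t' ->
  prob_below beta R1 t W P V n <= prob_below beta R1 t' W P V n.
Proof.
  intros HW HP H. apply (joint_avg_mono (P n) (W n) HP (HW n) _ _ 1); try (intros; apply ind_bounds).
  intros; apply Rmult_le_compat_l. apply HW. apply ind_mono; auto.
Qed.

(* Pointwise: if a < thr t * q then either v < exp(-n^beta gm) q, or a < thr (t+gm) * v. *)
Lemma ind_change_ref beta R1 t gm n a q v : 0 < a -> 0 <= q ->
  ind_below beta R1 t n a q <=
  ind_below beta R1 (t + gm) n a v +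
  (if Rlt_dec v (exp (- (Rpower (INR n) beta * gm)) * q) then 1 else 0).
Proof.
  intros Ha Hq.
  pose proof (ind_bounds beta R1 (t + gm) n a v).
  destruct (Req_dec (ind_below beta R1 t n a q) 0) as [E0|E0]; [rewrite E0; destruct Rlt_dec; lra|].
  destruct (ind_below_nonzero _ _ _ _ _ _ Ha E0) as [-> [Hqp Hlt]].
  destruct Rlt_dec as [|Hv]; [lra|].
  set (e := exp (- (Rpower (INR n) beta * gm))) in Hv.
  assert (He : 0 < e) by apply exp_pos.
  assert (Hthr : thr beta R1 n t * q = thr beta R1 n (t + gm) * (e * q)).
  { assert (Hinv : exp (Rpower (INR n) beta * gm) * e = 1)
      by (unfold e; rewrite <- exp_plus, Rplus_opp_r; apply exp_0).
    rewrite thr_shift.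
    replace (thr beta R1 n t * exp (Rpower (INR n) beta * gm) * (e * q))
      with (thr beta R1 n t * q * (exp (Rpower (INR n) beta * gm) * e)) by ring.
    rewrite Hinv; ring. }
  assert (e * q <= v) by lra.
  pose proof (thr_pos beta R1 n (t + gm)).
  rewrite ind_below_one; try lra.
  - pose proof (Rmult_lt_0_compat e q He Hqp); lra.
  - rewrite Hthr in Hlt. eapply Rlt_le_trans; [exact Hlt|]. apply Rmult_le_compat_l; lra.
Qed.

Lemma spectrum_change_ref beta R1 t gm W P Q n :
  is_channel W -> is_dist (P n) -> is_dist (Q n) -> 0 < gm ->
  prob_below beta R1 t W P Q n <=
  prob_below beta R1 (t + gm) W P (outdist W P) n + exp (- (Rpower (INR n) beta * gm)).
Proof.
  intros HW HP HQ Hg.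
  set (e := exp (- (Rpower (INR n) beta * gm))).
  set (V := outdist W P n).
  set (k := fun y => if Rlt_dec (V y) (e * Q n y) then 1 else 0).
  assert (Hk : forall y, 0 <= k y <= 1) by (intros; unfold k; destruct Rlt_dec; lra).
  change (joint_avg (P n) (W n) (fun x y => ind_below beta R1 t n (W n x y) (Q n y)) <=
          joint_avg (P n) (W n) (fun x y => ind_below beta R1 (t + gm) n (W n x y) (V y)) + e).
  eapply Rle_trans.
  { apply (joint_avg_mono (P n) (W n) HP (HW n) _
      (fun x y => ind_below beta R1 (t + gm) n (W n x y) (V y) + k y) 2).
    - intros; pose proof (ind_bounds beta R1 t n (W n x y) (Q n y)); lra.
    - intros; pose proof (ind_bounds beta R1 (t + gm) n (W n x y) (V y)); pose proof (Hk y); lra.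
    - intros x y. destruct (proj1 (HW n x) y) as [Hpos|Hz]; [|rewrite <- Hz; lra].
      apply Rmult_le_compat_l; [lra|]. apply ind_change_ref; auto. apply HQ. }
  rewrite (joint_avg_plus (P n) (W n) HP (HW n) _ (fun _ y => k y) 1 1); try (intros; apply ind_bounds); auto.
  apply Rplus_le_compat_l.
  (* the exceptional set { V < e Q } has V-mass at most e *)
  rewrite (joint_avg_output (P n) (W n) HP (HW n) k 1 Hk).
  destruct (outd_spec (P n) (W n) HP (HW n)) as [_ Hod].
  destruct (avg_spec (outd (P n) (W n)) k 1 Hod Hk) as [Hs1 _].
  replace e with (e * 1) by ring.
  apply (isum_le (fun y => outd (P n) (W n) y * k y) (fun y => e * Q n y)); auto.
  - intros y. unfold k. change (outd (P n) (W n) y) with (V y).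
    destruct Rlt_dec; [lra|]. rewrite Rmult_0_r. apply Rmult_le_pos; [unfold e; left; apply exp_pos| apply HQ].
  - apply isum_scal; apply HQ.
Qed.

(* The one-shot converse.  A code induces the empirical (uniform) distribution
   on its codewords; under it the spectrum is bounded by the error probability
   plus exp(-n^beta (rate2 - t)). *)

Definition emp (F : code) (x : nat) : R :=
  / INR (cN F) * fsum (cN F) (fun i => if Nat.eq_dec (cphi F i) x then 1 else 0).

Lemma emp_avg (F : code) (h : nat -> R) :
  infinite_sum (fun x => emp F x * h x) (/ INR (cN F) * fsum (cN F) (fun i => h (cphi F i))).
Proof.
  apply (isum_ext (fun x => / INR (cN F) *
            fsum (cN F) (fun i => if Nat.eq_dec (cphi F i) x then h x else 0))).
  - intros x. unfold emp. rewrite Rmult_assoc. f_equal. rewrite Rmult_comm, <- fsum_scal.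
    apply fsum_ext; intros; destruct Nat.eq_dec; ring.
  - apply isum_scal. apply isum_fsum. intros i Hi.
    apply (isum_ext (fun x => if Nat.eq_dec (cphi F i) x then h (cphi F i) else 0)).
    intros x; destruct Nat.eq_dec; subst; auto. apply isum_point.
Qed.

Lemma emp_dist (F : code) : (0 < cN F)%nat -> is_dist (emp F).
Proof.
  intros HN. assert (HNp : 0 < INR (cN F)) by (apply lt_0_INR; lia).
  split.
  - intros y. unfold emp. apply Rmult_le_pos. left; apply Rinv_0_lt_compat; auto.
    apply fsum_nonneg; intros; destruct Nat.eq_dec; lra.
  - apply (isum_ext (fun x => emp F x * 1)). intros; ring.
    pose proof (emp_avg F (fun _ => 1)) as Hf. simpl in Hf. rewrite fsum_const in Hf.
    replace (/ INR (cN F) * (INR (cN F) * 1)) with 1 in Hf by (field; lra). exact Hf.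
Qed.

Lemma emp_supp (F : code) (x : nat) : emp F x <> 0 -> exists i, (i < cN F)%nat /\ cphi F i = x.
Proof.
  intros H. apply NNPP; intro C. apply H. unfold emp.
  rewrite (fsum_ext _ _ (fun _ => 0)). rewrite fsum_const; ring.
  intros i Hi; destruct Nat.eq_dec; auto. exfalso; apply C; eauto.
Qed.

Lemma emp_cost c K n (F : code) : valid_code c K n F ->
  is_dist (emp F) /\ (forall x, emp F x <> 0 -> in_cost c K n x).
Proof.
  intros [HN [_ Hc]]. split. apply emp_dist; auto.
  intros x Hx. destruct (emp_supp F x Hx) as [i [Hi <-]]. auto.
Qed.

(* For a single codeword x with decoding set D: the part of the spectrum below
   level t is either decoded, where W < thr t * V, or lost in a decoding error. *)
Lemma codeword_spectrum_bound beta R1 t n (w V : nat -> R) (D : nat -> bool) :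
  is_dist w -> is_dist V ->
  ssum (fun y => w y * ind_below beta R1 t n (w y) (V y)) <=
  thr beta R1 n t * mass V D + (1 - mass w D).
Proof.
  intros Hw HV. set (th := thr beta R1 n t). assert (Hth : 0 < th) by apply thr_pos.
  destruct (avg_spec w (fun y => ind_below beta R1 t n (w y) (V y)) 1 Hw
              (fun y => ind_bounds _ _ _ _ _ _)) as [Hh _].
  replace (th * mass V D + (1 - mass w D)) with (th * mass V D + (1 + -1 * mass w D)) by ring.
  refine (isum_le _ (fun y => th * (if D y then V y else 0) + (w y + -1 * (if D y then w y else 0)))
                  _ _ _ Hh _).
  - intros y. pose proof (proj1 Hw y) as Hw0. pose proof (proj1 HV y) as HV0.
    pose proof (ind_bounds beta R1 t n (w y) (V y)) as Hb.
    destruct (D y); [|nra].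
    destruct (Req_dec (ind_below beta R1 t n (w y) (V y)) 0) as [E|E]; [rewrite E; nra|].
    destruct Hw0 as [Hwp|Hw0]; [|rewrite <- Hw0; nra].
    destruct (ind_below_nonzero _ _ _ _ _ _ Hwp E) as [-> [_ Hlt]]. fold th in Hlt. lra.
  - apply isum_plus; [apply isum_scal, mass_spec; auto|].
    apply isum_plus; [apply Hw|]. apply isum_scal, mass_spec; auto.
Qed.

Lemma decoding_sets_mass (F : code) (V : nat -> R) :
  is_dist V ->
  (forall i j y, (i < cN F)%nat -> (j < cN F)%nat -> i <> j -> cD F i y = true -> cD F j y = false) ->
  fsum (cN F) (fun i => mass V (cD F i)) <= 1.
Proof.
  intros HV Hdisj.
  apply (isum_le (fun y => fsum (cN F) (fun i => if cD F i y then V y else 0)) V); [| |apply HV].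
  - intros y. apply fsum_disjoint. apply HV. intros i j Hi Hj Hij HD; exact (Hdisj i j y Hi Hj Hij HD).
  - apply isum_fsum. intros i _. apply mass_spec; auto.
Qed.

Lemma rate2_exp beta R1 n t (F : code) : (0 < cN F)%nat ->
  / INR (cN F) * thr beta R1 n t = exp (- (Rpower (INR n) beta * (rate2 beta R1 n F - t))).
Proof.
  intros HN. assert (HNp : 0 < INR (cN F)) by (apply lt_0_INR; lia).
  pose proof (npow_pos n beta) as Hs.
  unfold rate2, thr.
  replace (- (Rpower (INR n) beta * ((ln (INR (cN F)) - INR n * R1) / Rpower (INR n) beta - t)))
    with (INR n * R1 + Rpower (INR n) beta * t + - ln (INR (cN F))) by (field; lra).
  rewrite (exp_plus _ (- ln _)), exp_Ropp, exp_ln by auto. ring.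
Qed.

Lemma one_shot_converse beta R1 t W P c K n (F : code) :
  is_channel W -> valid_code c K n F -> P n = emp F ->
  prob_below beta R1 t W P (outdist W P) n <=
  Perr W n F + exp (- (Rpower (INR n) beta * (rate2 beta R1 n F - t))).
Proof.
  intros HW HF HPn. pose proof HF as [HN [Hdisj _]].
  set (N := cN F) in *. assert (HNp : 0 < INR N) by (apply lt_0_INR; lia).
  set (V := outdist W P n).
  assert (HV : is_dist V) by (apply (outd_spec (P n) (W n)); [rewrite HPn; apply emp_dist|]; auto).
  set (th := thr beta R1 n t). assert (Hth : 0 < th) by apply thr_pos.
  set (dens := fun i => ssum (fun y => W n (cphi F i) y * ind_below beta R1 t n (W n (cphi F i) y) (V y))).
  assert (Hpb : prob_below beta R1 t W P (outdist W P) n = / INR N * fsum N dens).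
  { apply ssum_eq. rewrite HPn. apply (emp_avg F (fun x => ssum (fun y =>
      W n x y * ind_below beta R1 t n (W n x y) (V y)))). }
  assert (Hsum : fsum N dens <= th * fsum N (fun i => mass V (cD F i))
                               + fsum N (fun i => 1 - mass (W n (cphi F i)) (cD F i))).
  { rewrite <- fsum_scal, <- fsum_plus. apply fsum_le. intros i _.
    apply codeword_spectrum_bound; auto. }
  assert (Hmass : th * fsum N (fun i => mass V (cD F i)) <= th)
    by (pose proof (decoding_sets_mass F V HV Hdisj) as Hm; fold N in Hm; nra).
  assert (HinvN : 0 <= / INR N) by (left; apply Rinv_0_lt_compat; auto).
  rewrite Hpb, <- (rate2_exp beta R1 n t F HN). unfold Perr. fold N th.
  change (fun i => 1 - ssum (fun y => if cD F i y then W n (cphi F i) y else 0))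
    with (fun i => 1 - mass (W n (cphi F i)) (cD F i)).
  rewrite <- Rmult_plus_distr_l. apply Rmult_le_compat_l; [exact HinvN|lra].
Qed.

(* Codewords are chosen greedily: the i-th codeword x is decoded on the set of
   outputs where W x y > th * V y (V the output distribution) that were not
   claimed by earlier codewords.  As long as fewer than N codewords are chosen,
   the claimed outputs have V-mass < N / th, so on average over p a new
   codeword is still decoded with probability > 1 - tau, where
     tau = Pr{ W <= th V } + N / th. *)

Section Feinstein.
Variables (W : nat -> nat -> nat -> R) (n : nat) (p : nat -> R) (th : R) (N : nat).
Hypothesis HW : is_channel W.
Hypothesis Hp : is_dist p.
Hypothesis Hth : 0 < th.

Let V := outd p (W n).

Definition above (x y : nat) : bool := if Rlt_dec (th * V y) (W n x y) then true else false.

Fixpoint claimed (phi : nat -> nat) (i y : nat) : bool :=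
  match i with O => false | S j => claimed phi j y || above (phi j) y end.

Definition decode_set (phi : nat -> nat) (i y : nat) : bool := above (phi i) y && negb (claimed phi i y).

Definition tau : R := joint_avg p (W n) (fun x y => b2r (negb (above x y))) + INR N / th.

Definition good_prefix (phi : nat -> nat) (m : nat) : Prop := forall i, (i < m)%nat ->
  p (phi i) <> 0 /\ 1 - tau < chan_avg (W n) (fun _ y => b2r (decode_set phi i y)) (phi i).

Lemma claimed_ext (phi phi' : nat -> nat) (i y : nat) :
  (forall j, (j < i)%nat -> phi j = phi' j) -> claimed phi i y = claimed phi' i y.
Proof.
  induction i; simpl; intros H; auto. rewrite (IHi ltac:(intros; apply H; lia)), (H i) by lia. auto.
Qed.

Lemma claimed_of_above (phi : nat -> nat) (i j y : nat) :
  (i < j)%nat -> above (phi i) y = true -> claimed phi j y = true.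
Proof.
  induction j; intros; [lia|]. simpl. destruct (Nat.eq_dec i j).
  - subst; rewrite H0; apply Bool.orb_true_r.
  - rewrite IHj; auto; lia.
Qed.

Lemma decode_set_disjoint (phi : nat -> nat) (i j y : nat) :
  i <> j -> decode_set phi i y = true -> decode_set phi j y = false.
Proof.
  intros Hij Hd. unfold decode_set in *. apply andb_prop in Hd as [Hd1 Hd2].
  destruct (Nat.lt_trichotomy i j) as [Hlt|[Heq|Hgt]]; [| lia |].
  - rewrite (claimed_of_above phi i j y Hlt Hd1). apply Bool.andb_false_r.
  - destruct (above (phi j) y) eqn:Ej; auto.
    rewrite (claimed_of_above phi j i y Hgt Ej) in Hd2. discriminate.
Qed.

Lemma claimed_decoded (phi : nat -> nat) (m y : nat) : claimed phi m y = true ->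
  exists j, (j < m)%nat /\ decode_set phi j y = true.
Proof.
  induction m; simpl; intros H; [discriminate|].
  destruct (claimed phi m y) eqn:E.
  - destruct (IHm eq_refl) as [j [Hj Hd]]; exists j; split; auto.
  - exists m; split; auto. unfold decode_set. rewrite E. simpl in H. rewrite H. auto.
Qed.

Lemma V_dist : is_dist V.
Proof. apply (outd_spec p (W n)); auto. Qed.

(* A decoding set has V-mass at most 1 / th, since W x > th V on it. *)
Lemma decode_set_mass (phi : nat -> nat) (j : nat) :
  ssum (fun y => V y * b2r (decode_set phi j y)) <= / th.
Proof.
  destruct (avg_spec V (fun y => b2r (decode_set phi j y)) 1 V_dist (fun y => b2r_bounds _)) as [H1 _].
  destruct (avg_spec (W n (phi j)) (fun y => b2r (decode_set phi j y)) 1 (HW n _)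
              (fun y => b2r_bounds _)) as [H2 [_ H3]].
  assert (ssum (fun y => V y * b2r (decode_set phi j y)) <=
          / th * ssum (fun y => W n (phi j) y * b2r (decode_set phi j y))).
  { refine (isum_le _ (fun y => / th * (W n (phi j) y * b2r (decode_set phi j y))) _ _ _ H1 _).
    2: apply isum_scal; auto.
    intros y. unfold decode_set, above. destruct Rlt_dec; destruct (claimed phi j y); simpl;
      try (rewrite !Rmult_0_r; lra).
    rewrite !Rmult_1_r. apply (Rmult_le_reg_l th); auto. rewrite <- Rmult_assoc, Rinv_r, Rmult_1_l; lra. }
  assert (0 < / th) by (apply Rinv_0_lt_compat; auto). nra.
Qed.

Lemma claimed_mass (phi : nat -> nat) (m : nat) :
  joint_avg p (W n) (fun _ y => b2r (claimed phi m y)) <= INR m / th.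
Proof.
  rewrite (joint_avg_output p (W n) Hp (HW n) (fun y => b2r (claimed phi m y)) 1)
    by (intros; apply b2r_bounds).
  fold V. pose proof V_dist as HVd.
  destruct (avg_spec V (fun y => b2r (claimed phi m y)) 1 HVd (fun y => b2r_bounds _)) as [H1 _].
  apply Rle_trans with (fsum m (fun j => ssum (fun y => V y * b2r (decode_set phi j y)))).
  2:{ apply Rle_trans with (fsum m (fun _ => / th)).
      apply fsum_le; intros; apply decode_set_mass. rewrite fsum_const. unfold Rdiv; lra. }
  refine (isum_le _ (fun y => fsum m (fun j => V y * b2r (decode_set phi j y))) _ _ _ H1 _).
  - intros y. assert (Hnn : forall j, 0 <= V y * b2r (decode_set phi j y))
      by (intros; apply Rmult_le_pos; [apply HVd|apply b2r_bounds]).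
    destruct (claimed phi m y) eqn:E.
    + destruct (claimed_decoded phi m y E) as [j [Hj Hd]].
      pose proof (fsum_ge_term m _ j Hnn Hj) as Hge. cbv beta in Hge. rewrite Hd in Hge.
      simpl b2r in *. lra.
    + simpl. rewrite Rmult_0_r. apply fsum_nonneg; auto.
  - apply isum_fsum. intros i _.
    apply (avg_spec V (fun y => b2r (decode_set phi i y)) 1 HVd (fun y => b2r_bounds _)).
Qed.

(* While m < N, some x in the support of p would be decoded with probability
   > 1 - tau on the unclaimed part of { W x > th V }: otherwise averaging over p
   gives Pr{W > th V} <= 1 - tau + m / th < Pr{W > th V}. *)
Lemma good_candidate (phi : nat -> nat) (m : nat) : (m < N)%nat ->
  exists x, p x <> 0 /\
    1 - tau < chan_avg (W n) (fun x y => b2r (above x y && negb (claimed phi m y))) x.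
Proof.
  intros Hm. apply NNPP; intro Hno.
  assert (Hall : forall x, p x <> 0 ->
    chan_avg (W n) (fun x y => b2r (above x y && negb (claimed phi m y))) x <= 1 - tau).
  { intros x Hx. apply Rnot_lt_le. intro C; apply Hno; eauto. }
  set (g := fun x y => b2r (above x y)).
  set (ng := fun x y => b2r (negb (above x y))).
  set (ga := fun x y => b2r (above x y && negb (claimed phi m y))).
  set (u := fun (_ : nat) y => b2r (claimed phi m y)).
  assert (Hb : forall b : bool, 0 <= b2r b <= 1) by apply b2r_bounds.
  assert (Hsum1 : joint_avg p (W n) g + joint_avg p (W n) ng = 1).
  { rewrite <- (joint_avg_plus p (W n) Hp (HW n) g ng 1 1) by (intros; apply Hb).
    rewrite <- (joint_avg_one p (W n) Hp (HW n)). f_equal.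
    extensionality x; extensionality y. unfold g, ng; destruct above; simpl; ring. }
  assert (Hg1 : joint_avg p (W n) g <= joint_avg p (W n) ga + joint_avg p (W n) u).
  { rewrite <- (joint_avg_plus p (W n) Hp (HW n) ga u 1 1) by (intros; apply Hb).
    apply (joint_avg_mono p (W n) Hp (HW n) _ _ 2);
      try (intros x y; unfold g, ga, u; pose proof (Hb (above x y));
           pose proof (Hb (andb (above x y) (negb (claimed phi m y)))); pose proof (Hb (claimed phi m y)); lra).
    intros x y. apply Rmult_le_compat_l. apply HW. unfold g, ga, u.
    destruct (above x y), (claimed phi m y); simpl; lra. }
  assert (Hga : joint_avg p (W n) ga <= 1 - tau).
  { destruct (joint_avg_spec p (W n) Hp (HW n) ga 1) as [H1 _]; [intros; apply Hb|].
    refine (isum_le _ (fun x => p x * (1 - tau)) _ _ _ H1 _).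
    - intros x. destruct (Req_dec (p x) 0) as [E|E]; [rewrite E; lra|].
      apply Rmult_le_compat_l; [apply Hp | apply Hall; auto].
    - pose proof (isum_scal p 1 (1 - tau) (proj2 Hp)) as Hs. rewrite Rmult_1_r in Hs.
      eapply isum_ext; [|exact Hs]. intros; simpl; ring. }
  pose proof (claimed_mass phi m) as Hu.
  assert (INR m / th < INR N / th)
    by (unfold Rdiv; apply Rmult_lt_compat_r; [apply Rinv_0_lt_compat; auto | apply lt_INR; auto]).
  unfold tau in Hga. fold ng in Hga. unfold u in Hg1. lra.
Qed.

Lemma good_step (phi : nat -> nat) (m : nat) :
  (m < N)%nat -> good_prefix phi m -> exists phi', good_prefix phi' (S m).
Proof.
  intros Hm Hg. destruct (good_candidate phi m Hm) as [x [Hx1 Hx2]].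
  set (phi' := fun k => if Nat.eq_dec k m then x else phi k).
  assert (Hcl : forall i y, (i <= m)%nat -> claimed phi' i y = claimed phi i y).
  { intros i y Hi. apply claimed_ext. intros j Hj. unfold phi'. destruct Nat.eq_dec; [lia|auto]. }
  exists phi'. intros i Hi.
  assert (Hdec : chan_avg (W n) (fun _ y => b2r (decode_set phi' i y)) (phi' i) =
                 chan_avg (W n) (fun _ y => b2r (andb (above (phi' i) y) (negb (claimed phi i y))))
                   (phi' i)).
  { apply ssum_ext. intros y. unfold decode_set. rewrite Hcl by lia. reflexivity. }
  rewrite Hdec. unfold phi'. destruct (Nat.eq_dec i m) as [->|Hne].
  - split; [exact Hx1 | exact Hx2].
  - exact (Hg i ltac:(lia)).
Qed.

Lemma good_codebook (m : nat) : (m <= N)%nat -> exists phi, good_prefix phi m.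
Proof.
  induction m; intros Hm.
  - exists (fun _ => 0%nat); intros i Hi; lia.
  - destruct (IHm ltac:(lia)) as [phi Hphi]. apply (good_step phi m); auto.
Qed.

End Feinstein.

Lemma feinstein W n P c K th N : is_channel W -> is_dist (P n) ->
  (forall x, P n x <> 0 -> in_cost c K n x) -> 0 < th -> (0 < N)%nat ->
  exists F, valid_code c K n F /\ cN F = N /\ Perr W n F <= tau W n (P n) th N.
Proof.
  intros HW Hp Hc Hth HN.
  destruct (good_codebook W n (P n) th N HW Hp Hth N (le_n N)) as [phi Hphi].
  exists (Code N phi (decode_set W n (P n) th phi)). split; [|split; auto].
  - split; [simpl; auto|split].
    + intros i j y _ _ Hij. apply decode_set_disjoint; auto.
    + simpl. intros i Hi. apply Hc, (Hphi i Hi).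
  - unfold Perr. simpl.
    assert (HNp : 0 < INR N) by (apply lt_0_INR; auto).
    assert (Hle : fsum N (fun i => 1 - ssum (fun y => if decode_set W n (P n) th phi i y
                                                     then W n (phi i) y else 0))
                  <= fsum N (fun _ => tau W n (P n) th N)).
    { apply fsum_le. intros i Hi. destruct (Hphi i Hi) as [_ H2]. unfold chan_avg in H2.
      rewrite (ssum_ext _ (fun y => W n (phi i) y * b2r (decode_set W n (P n) th phi i y))); [lra|].
      intros y; unfold b2r; destruct decode_set; ring. }
    rewrite fsum_const in Hle. apply (Rmult_le_compat_l (/ INR N)) in Hle.
    + replace (/ INR N * (INR N * tau W n (P n) th N)) with (tau W n (P n) th N) in Hle
        by (field; lra). exact Hle.
    + left; apply Rinv_0_lt_compat; auto.
Qed.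

(* One-shot achievability: Feinstein's lemma at threshold thr (r + d) with
   N = floor (thr r) codewords. *)

Lemma nat_floor (x : R) : 1 <= x -> exists N : nat, (1 <= N)%nat /\ INR N <= x < INR N + 1.
Proof.
  intros Hx. destruct (archimed x) as [H1 H2].
  assert (Hz : (1 < up x)%Z) by (apply lt_IZR; simpl; lra).
  exists (Z.to_nat (up x - 1)).
  assert (E : INR (Z.to_nat (up x - 1)) = IZR (up x) - 1).
  { rewrite INR_IZR_INZ, Z2Nat.id by lia. rewrite minus_IZR. simpl; ring. }
  rewrite E. split; [|lra]. lia.
Qed.

Definition single_code (x0 : nat) : code := Code 1 (fun _ => x0) (fun _ _ => true).

Lemma single_code_valid c K n x0 : in_cost c K n x0 -> valid_code c K n (single_code x0).
Proof. intros H. split; simpl; [lia|split]; [intros; lia | auto]. Qed.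

Lemma single_code_Perr W n x0 : is_channel W -> Perr W n (single_code x0) = 0.
Proof.
  intros HW. unfold Perr; simpl. rewrite (ssum_eq _ 1); [field|].
  apply (isum_ext (W n x0)); [auto | apply HW].
Qed.

Lemma tau_le_spectrum beta R1 W P n r d N : is_channel W -> is_dist (P n) -> 0 < d ->
  tau W n (P n) (thr beta R1 n (r + d)) N <=
  prob_below beta R1 (r + 2 * d) W P (outdist W P) n + INR N / thr beta R1 n (r + d).
Proof.
  intros HW HP Hd. unfold tau. apply Rplus_le_compat_r.
  apply (joint_avg_mono (P n) (W n) HP (HW n) _ _ 1);
    try (intros; apply b2r_bounds); try (intros; apply ind_bounds).
  intros x y. destruct (proj1 (HW n x) y) as [HWp|E]; [|rewrite <- E; lra].
  apply Rmult_le_compat_l; [lra|].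
  unfold b2r, above. destruct Rlt_dec as [Hlt|Hnlt]; simpl.
  - apply ind_bounds.
  - assert (Hle : W n x y <= thr beta R1 n (r + d) * outd (P n) (W n) y) by lra.
    pose proof (thr_pos beta R1 n (r + d)).
    assert (HVp : 0 < outd (P n) (W n) y) by nra.
    rewrite ind_below_one; auto; [lra|].
    eapply Rle_lt_trans; [exact Hle|]. apply Rmult_lt_compat_r; auto.
    apply exp_increasing. pose proof (npow_pos n beta). nra.
Qed.

Lemma floor_rate beta R1 n r (F : code) :
  1 <= thr beta R1 n r -> thr beta R1 n r < INR (cN F) + 1 -> (1 <= cN F)%nat ->
  r - ln 2 / Rpower (INR n) beta <= rate2 beta R1 n F.
Proof.
  intros HX HN2 HN. pose proof (npow_pos n beta) as Hs.
  assert (1 <= INR (cN F)) by (apply (le_INR 1); lia).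
  assert (Hln : ln (thr beta R1 n r / 2) <= ln (INR (cN F))).
  { destruct (Req_dec (thr beta R1 n r / 2) (INR (cN F))) as [->|]; [lra|].
    left; apply ln_increasing; lra. }
  replace (ln (thr beta R1 n r / 2)) with (INR n * R1 + Rpower (INR n) beta * r - ln 2) in Hln
    by (unfold Rdiv, thr; rewrite ln_mult, ln_Rinv, ln_exp by (try apply Rinv_0_lt_compat; try apply exp_pos; lra); ring).
  unfold rate2. apply (Rmult_le_reg_r (Rpower (INR n) beta)); auto. unfold Rdiv.
  rewrite Rmult_minus_distr_r, !Rmult_assoc, !Rinv_l, !Rmult_1_r by lra. lra.
Qed.

Lemma one_shot_achievability beta R1 W P c K n r d : is_channel W -> is_dist (P n) ->
  (forall x, P n x <> 0 -> in_cost c K n x) -> (exists x, in_cost c K n x) -> 0 < d ->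
  exists F, valid_code c K n F /\
    r - ln 2 / Rpower (INR n) beta <= rate2 beta R1 n F /\
    Perr W n F <= prob_below beta R1 (r + 2 * d) W P (outdist W P) n
                  + exp (- (Rpower (INR n) beta * d)).
Proof.
  intros HW HP Hc [x0 Hx0] Hd.
  pose proof (npow_pos n beta) as Hs.
  assert (Hl2 : 0 < ln 2) by (pose proof ln_lt_2; lra).
  assert (Hpb0 := pb_bounds beta R1 (r + 2 * d) W P (outdist W P) n HW HP).
  assert (He0 : 0 < exp (- (Rpower (INR n) beta * d))) by apply exp_pos.
  destruct (Rlt_dec (thr beta R1 n r) 1) as [HX|HX].
  - (* thr r < 1: the target rate is negative, one codeword suffices *)
    exists (single_code x0). split; [apply single_code_valid; auto|split].
    + unfold rate2; simpl. rewrite ln_1.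
      assert (Hneg : INR n * R1 + Rpower (INR n) beta * r < 0)
        by (unfold thr in HX; rewrite <- exp_0 in HX; apply exp_lt_inv in HX; auto).
      assert (r <= (0 - INR n * R1) / Rpower (INR n) beta).
      { apply (Rmult_le_reg_r (Rpower (INR n) beta)); auto.
        unfold Rdiv. rewrite Rmult_assoc, Rinv_l, Rmult_1_r by lra. lra. }
      assert (0 < ln 2 / Rpower (INR n) beta) by (apply Rdiv_lt_0_compat; auto). lra.
    + rewrite single_code_Perr; auto. lra.
  - destruct (nat_floor (thr beta R1 n r) ltac:(lra)) as [N [HN [HN1 HN2]]].
    set (th := thr beta R1 n (r + d)). assert (Hth : 0 < th) by apply thr_pos.
    destruct (feinstein W n P c K th N HW HP Hc Hth ltac:(lia)) as [F [HF [HFN HFP]]].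
    exists F. split; auto. split; [apply floor_rate; rewrite ?HFN; auto; lra|].
    eapply Rle_trans; [exact HFP|]. eapply Rle_trans; [apply tau_le_spectrum; auto|].
    apply Rplus_le_compat_l. fold th.
    (* N / thr (r + d) <= thr r / thr (r + d) = exp (- n^beta d) *)
    apply Rle_trans with (thr beta R1 n r * / th).
    + unfold Rdiv. apply Rmult_le_compat_r; [left; apply Rinv_0_lt_compat|]; auto.
    + unfold th. rewrite thr_shift, Rinv_mult, <- Rmult_assoc, Rinv_r, Rmult_1_l, <- exp_Ropp
        by (apply Rgt_not_eq, thr_pos). lra.
Qed.

Lemma npow_unbounded (beta : R) : 0 < beta -> forall M, eventually (fun n => M <= Rpower (INR n) beta).
Proof.
  intros Hb M.
  destruct (nat_floor (exp (Rabs M / beta) + 1)) as [N0 [HN0 [H1 H2]]].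
  { pose proof (exp_pos (Rabs M / beta)); lra. }
  exists (S N0). intros n Hn.
  assert (INR (S N0) <= INR n) by (apply le_INR; auto). rewrite S_INR in H.
  assert (Hexp : exp (Rabs M / beta) < INR n) by lra.
  assert (Hlt : Rabs M / beta < ln (INR n)).
  { rewrite <- (ln_exp (Rabs M / beta)). apply ln_increasing; auto. apply exp_pos. }
  unfold Rpower. eapply Rle_trans; [|apply exp_ineq1_le].
  apply (Rmult_lt_compat_l beta) in Hlt; auto. unfold Rdiv in Hlt.
  rewrite <- Rmult_assoc, (Rmult_comm beta (Rabs M)), Rmult_assoc, Rinv_r, Rmult_1_r in Hlt by lra.
  pose proof (Rle_abs M). lra.
Qed.

Lemma exp_decay (beta c e : R) : 0 < beta -> 0 < c -> 0 < e ->
  eventually (fun n => exp (- (Rpower (INR n) beta * c)) <= e).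
Proof.
  intros Hb Hc He. apply (eventually_mono _ _ (npow_unbounded beta Hb ((- ln e) / c))).
  intros n Hn. rewrite <- (exp_ln e) by auto. apply exp_le_exp.
  apply (Rmult_le_compat_r c) in Hn; [|lra]. unfold Rdiv in Hn.
  rewrite Rmult_assoc, Rinv_l, Rmult_1_r in Hn by lra. lra.
Qed.

Lemma ln2_decay (beta e : R) : 0 < beta -> 0 < e ->
  eventually (fun n => ln 2 / Rpower (INR n) beta <= e).
Proof.
  intros Hb He. apply (eventually_mono _ _ (npow_unbounded beta Hb (ln 2 / e))).
  intros n Hn. pose proof (npow_pos n beta).
  assert (0 < ln 2) by (pose proof ln_lt_2; lra).
  apply (Rmult_le_reg_r (Rpower (INR n) beta)); auto. unfold Rdiv.
  rewrite Rmult_assoc, Rinv_l, Rmult_1_r by lra.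
  apply (Rmult_le_compat_l e) in Hn; [|lra]. unfold Rdiv in Hn.
  rewrite (Rmult_comm (ln 2)), <- Rmult_assoc, Rinv_r, Rmult_1_l in Hn by lra. lra.
Qed.

Lemma Perr_bounds W c K n F : is_channel W -> valid_code c K n F -> 0 <= Perr W n F <= 1.
Proof.
  intros HW [HN _]. unfold Perr.
  assert (HNp : 0 < INR (cN F)) by (apply lt_0_INR; lia).
  assert (Hb : forall i, 0 <= 1 - mass (W n (cphi F i)) (cD F i) <= 1)
    by (intros i; pose proof (proj2 (mass_spec _ (cD F i) (HW n (cphi F i)))); lra).
  pose proof (fsum_le (cN F) _ _ (fun i _ => proj2 (Hb i))) as Hhi.
  pose proof (fsum_le (cN F) (fun _ => 0) _ (fun i _ => proj1 (Hb i))) as Hlo.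
  rewrite fsum_const in Hhi, Hlo. assert (0 < / INR (cN F)) by (apply Rinv_0_lt_compat; auto).
  change (fun i => 1 - ssum (fun y => if cD F i y then W n (cphi F i) y else 0))
    with (fun i => 1 - mass (W n (cphi F i)) (cD F i)).
  split; [nra|].
  apply (Rmult_le_compat_l (/ INR (cN F))) in Hhi; [|lra].
  replace (/ INR (cN F) * (INR (cN F) * 1)) with 1 in Hhi by (field; lra). exact Hhi.
Qed.

Lemma Jp_range beta t R1 P Q W : is_channel W -> (forall n, is_dist (P n)) ->
  0 <= Jp beta t R1 P Q W <= 1.
Proof. intros HW HP. apply (limsupR_spec _ 0 1). intros; apply pb_bounds; auto. Qed.

Lemma Jp_eventually beta t R1 P Q W : is_channel W -> (forall n, is_dist (P n)) ->
  forall g, 0 < g -> eventually (fun n => prob_below beta R1 t W P Q n <= Jp beta t R1 P Q W + g).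
Proof. intros HW HP. apply (limsupR_eventually _ 0 1). intros; apply pb_bounds; auto. Qed.

Lemma Jp_le beta t R1 P Q W a : is_channel W -> (forall n, is_dist (P n)) ->
  (forall g, 0 < g -> eventually (fun n => prob_below beta R1 t W P Q n <= a + g)) ->
  Jp beta t R1 P Q W <= a.
Proof. intros HW HP. apply (limsupR_le _ 0 1). intros; apply pb_bounds; auto. Qed.

Lemma Jp_mono beta t t' R1 P Q W : is_channel W -> (forall n, is_dist (P n)) -> t <= t' ->
  Jp beta t R1 P Q W <= Jp beta t' R1 P Q W.
Proof.
  intros HW HP Ht. apply Jp_le; auto. intros g Hg.
  apply (eventually_mono _ _ (Jp_eventually beta t' R1 P Q W HW HP g Hg)).
  intros n Hn. pose proof (pb_mono beta R1 t t' W P Q n HW (HP n) Ht). lra.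
Qed.

Lemma Ip_is_Jp beta t R1 P W : Ip beta t R1 P W = Jp beta t R1 P (outdist W P) W.
Proof. reflexivity. Qed.

Lemma Jp_le_Ip beta R1 W P Q t g : 0 < beta -> is_channel W ->
  (forall n, is_dist (P n)) -> is_dist_seq Q -> 0 < g ->
  Jp beta t R1 P Q W <= Ip beta (t + g) R1 P W.
Proof.
  intros Hb HW HP HQ Hg. apply Jp_le; auto. intros h Hh.
  apply (eventually_mono _ _ (eventually_and _ _
    (Jp_eventually beta (t + g) R1 P (outdist W P) W HW HP (h/2) ltac:(lra))
    (exp_decay beta g (h / 2) Hb Hg ltac:(lra)))).
  intros n [H1 H2]. pose proof (spectrum_change_ref beta R1 t g W P Q n HW (HP n) (HQ n) Hg).
  rewrite Ip_is_Jp. lra.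
Qed.

Lemma outdist_seq W P : is_channel W -> (forall n, is_dist (P n)) -> is_dist_seq (outdist W P).
Proof. intros HW HP n. apply (outd_spec (P n) (W n)); auto. Qed.

(* A diagonal index: given thresholds T k, an index sequence k(n) -> oo with
   T (k n) <= n whenever k n > 0.  It is built greedily: increase k as soon as
   n reaches T (k + 1). *)

Fixpoint diag_index (T : nat -> nat) (n : nat) : nat :=
  match n with
  | O => O
  | S m => if Nat.leb (T (S (diag_index T m))) (S m) then S (diag_index T m) else diag_index T m
  end.

Lemma diag_index_below (T : nat -> nat) (n : nat) : diag_index T n = O \/ (T (diag_index T n) <= n)%nat.
Proof.
  induction n; simpl; auto.
  destruct (Nat.leb (T (S (diag_index T n))) (S n)) eqn:E.
  - right. apply Nat.leb_le in E; auto.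
  - destruct IHn; auto.
Qed.

Lemma diag_index_mono (T : nat -> nat) (a b : nat) : (a <= b)%nat -> (diag_index T a <= diag_index T b)%nat.
Proof. induction 1; auto. simpl. destruct Nat.leb; lia. Qed.

Lemma diag_index_unbounded (T : nat -> nat) (k : nat) : eventually (fun n => (k <= diag_index T n)%nat).
Proof.
  assert (Hex : exists n, (k <= diag_index T n)%nat).
  { induction k as [|k [n Hn]]; [exists O; lia|].
    set (m := max n (T (S k))).
    assert (Hm : (k <= diag_index T m)%nat) by (eapply Nat.le_trans; [exact Hn|apply diag_index_mono; lia]).
    destruct (Nat.eq_dec (diag_index T m) k) as [E|E]; [|exists m; lia].
    exists (S m). simpl. rewrite E.
    replace (Nat.leb (T (S k)) (S m)) with true by (symmetry; apply Nat.leb_le; lia). lia. }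
  destruct Hex as [N HN]. exists N. intros n Hn.
  eapply Nat.le_trans; [exact HN|]. apply diag_index_mono; auto.
Qed.

Definition margin (k : nat) : R := / INR (S k).

Lemma margin_pos (k : nat) : 0 < margin k.
Proof. apply Rinv_0_lt_compat, lt_0_INR; lia. Qed.

Lemma margin_anti (k k' : nat) : (k <= k')%nat -> margin k' <= margin k.
Proof. intros H. apply Rinv_le_contravar; [apply lt_0_INR; lia | apply le_INR; lia]. Qed.

Lemma margin_small (g : R) : 0 < g -> exists k, (1 <= k)%nat /\ margin k <= g.
Proof.
  intros Hg. destruct (archimed_cor1 g Hg) as [k [Hk Hk0]]. exists k. split; [lia|].
  assert (0 < INR k) by (apply lt_0_INR; lia).
  assert (INR k <= INR (S k)) by (apply le_INR; lia).
  assert (/ INR (S k) <= / INR k) by (apply Rinv_le_contravar; auto). unfold margin. lra.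
Qed.

Section Capacity.
Variables (beta : R) (W : nat -> nat -> nat -> R) (c : nat -> nat -> R) (K R1 : R).
Hypothesis Hb : 0 < beta.
Hypothesis HW : is_channel W.
Hypothesis HK : forall n, exists x, in_cost c K n x.

Definition Ilim (R2 : R) (P : nat -> nat -> R) : R := lim_down0 (fun gm => Ip beta (R2 - gm) R1 P W).

Lemma Ilim_spec (R2 : R) (P : nat -> nat -> R) : (forall n, is_dist (P n)) ->
  (forall gm, 0 < gm -> Ip beta (R2 - gm) R1 P W <= Ilim R2 P) /\
  (forall b, (forall gm, 0 < gm -> Ip beta (R2 - gm) R1 P W <= b) -> Ilim R2 P <= b).
Proof.
  intros HP. apply (lim_down0_monotone _ 1).
  - intros g1 g2 Hg. apply Jp_mono; auto. lra.
  - intros; apply Jp_range; auto.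
Qed.

Definition emp_seq (Phi : nat -> code) : nat -> nat -> R := fun n => emp (Phi n).

Lemma emp_seq_cost (Phi : nat -> code) : (forall n, valid_code c K n (Phi n)) -> in_Pc c K (emp_seq Phi).
Proof. intros H n. apply (emp_cost c K n); auto. Qed.

Lemma asymptotic_converse (Phi : nat -> code) (r t a : R) : (forall n, valid_code c K n (Phi n)) ->
  leER (Fin r) (liminfER (fun n => rate2 beta R1 n (Phi n))) ->
  leER (limsupER (fun n => Perr W n (Phi n))) (Fin a) -> t < r ->
  Ip beta t R1 (emp_seq Phi) W <= a.
Proof.
  intros HPhi Hr Ha Ht.
  assert (HP : forall n, is_dist (emp_seq Phi n)) by (intros n; apply (emp_seq_cost Phi HPhi n)).
  apply Jp_le; auto. intros g Hg.
  apply (eventually_mono _ _ (eventually_and _ _ (liminf_eventually _ _ Hr ((r - t)/2) ltac:(lra))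
            (eventually_and _ _ (limsup_eventually _ _ Ha (g/2) ltac:(lra))
                            (exp_decay beta ((r - t)/2) (g/2) Hb ltac:(lra) ltac:(lra))))).
  intros n [H1 [H2 H3]].
  pose proof (one_shot_converse beta R1 t W (emp_seq Phi) c K n (Phi n) HW (HPhi n) eq_refl).
  assert (exp (- (Rpower (INR n) beta * (rate2 beta R1 n (Phi n) - t)))
          <= exp (- (Rpower (INR n) beta * ((r - t) / 2)))).
  { apply exp_le_exp. pose proof (npow_pos n beta). nra. }
  lra.
Qed.

Lemma converse_Cp (R2 : R) (Phi : nat -> code) : (forall n, valid_code c K n (Phi n)) ->
  leER (Fin R2) (liminfER (fun n => rate2 beta R1 n (Phi n))) ->
  leER (Fin (Ilim R2 (emp_seq Phi))) (limsupER (fun n => Perr W n (Phi n))).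
Proof.
  intros HPhi Hr.
  destruct (limsupR_spec (fun n => Perr W n (Phi n)) 0 1) as [Hp _].
  { intros; apply (Perr_bounds W c K); auto. }
  rewrite Hp. simpl.
  apply (proj2 (Ilim_spec R2 (emp_seq Phi) (fun n => proj1 (emp_seq_cost Phi HPhi n)))).
  intros gm Hgm. apply (asymptotic_converse Phi R2); auto. rewrite Hp; apply leER_refl. lra.
Qed.

Lemma converse_Ccap (eps : R) (Phi : nat -> code) : (forall n, valid_code c K n (Phi n)) ->
  leER (limsupER (fun n => Perr W n (Phi n))) (Fin eps) ->
  leER (liminfER (fun n => rate2 beta R1 n (Phi n))) (Iinf beta eps R1 (emp_seq Phi) W).
Proof.
  intros HPhi He. apply leER_of_approx. intros r Hr g Hg.
  apply sup_ub. exists (r - g); split; auto.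
  apply (asymptotic_converse Phi r); auto. lra.
Qed.

Lemma spectrum_margin (R2 : R) (P : nat -> nat -> R) : (forall n, is_dist (P n)) ->
  forall g, 0 < g -> eventually (fun n =>
     prob_below beta R1 (R2 - g) W P (outdist W P) n <= Ilim R2 P + g /\
     exp (- (Rpower (INR n) beta * (g / 2))) <= g /\
     ln 2 / Rpower (INR n) beta <= g).
Proof.
  intros HPd g Hg. destruct (Ilim_spec R2 P HPd) as [HL1 _].
  apply eventually_and; [|apply eventually_and; [apply exp_decay|apply ln2_decay]; auto; lra].
  apply (eventually_mono _ _ (Jp_eventually beta (R2 - g) R1 P (outdist W P) W HW HPd g Hg)).
  intros n Hn. specialize (HL1 g Hg). rewrite Ip_is_Jp in HL1. lra.
Qed.

(* Achievability of the Cp formula: along the diagonal, use the one-shot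
   bound at level R2 - 2 gamma_k with gamma_k = margin (k n) -> 0. *)
Lemma achievability_Cp (R2 : R) (P : nat -> nat -> R) : in_Pc c K P ->
  exists Phi, (forall n, valid_code c K n (Phi n)) /\
    leER (Fin R2) (liminfER (fun n => rate2 beta R1 n (Phi n))) /\
    leER (limsupER (fun n => Perr W n (Phi n))) (Fin (Ilim R2 P)).
Proof.
  intros HP.
  assert (HPd : forall n, is_dist (P n)) by (intros; apply HP).
  (* for each k, from some block length T k on, all error terms are within margin k *)
  destruct (choice _ (fun k => spectrum_margin R2 P HPd (margin k) (margin_pos k))) as [T HTT].
  set (k := diag_index T).
  assert (HF : forall n, exists F, valid_code c K n F /\
    (R2 - 2 * margin (k n)) - ln 2 / Rpower (INR n) beta <= rate2 beta R1 n F /\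
    Perr W n F <= prob_below beta R1 (R2 - margin (k n)) W P (outdist W P) n +
                  exp (- (Rpower (INR n) beta * (margin (k n) / 2)))).
  { intros n. pose proof (margin_pos (k n)).
    replace (R2 - margin (k n)) with (R2 - 2 * margin (k n) + 2 * (margin (k n) / 2)) by field.
    apply one_shot_achievability; auto; [apply HP | lra]. }
  destruct (choice _ HF) as [Phi HPhi].
  exists Phi. split; [intros; apply HPhi|].
  assert (Hgood : forall g, 0 < g -> eventually (fun n =>
     R2 - g <= rate2 beta R1 n (Phi n) /\ Perr W n (Phi n) <= Ilim R2 P + g)).
  { intros g Hg. destruct (margin_small (g / 3) ltac:(lra)) as [K0 [HK0 HK0']].
    apply (eventually_mono _ _ (diag_index_unbounded T K0)). intros n HN.
    fold (k n) in HN. destruct (diag_index_below T n) as [E|E]; fold (k n) in E; [lia|].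
    destruct (HTT (k n) n E) as [Ha [Hb' Hc]]. destruct (HPhi n) as [_ [Hr Hp]].
    pose proof (margin_anti K0 (k n) HN). split; lra. }
  split.
  - apply liminf_ge_of_eventually. intros g Hg.
    apply (eventually_mono _ _ (Hgood g Hg)). tauto.
  - apply limsup_le_of_eventually. intros g Hg.
    apply (eventually_mono _ _ (Hgood g Hg)). tauto.
Qed.

Lemma achievability_Ccap (eps R2 eta : R) (P : nat -> nat -> R) :
  in_Pc c K P -> Ip beta R2 R1 P W <= eps -> 0 < eta ->
  leER (Fin (R2 - eta)) (Ccap beta eps R1 W c K).
Proof.
  intros HP HI He.
  assert (HPd : forall n, is_dist (P n)) by (intros; apply HP).
  assert (HF : forall n, exists F, valid_code c K n F /\
    (R2 - eta) - ln 2 / Rpower (INR n) beta <= rate2 beta R1 n F /\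
    Perr W n F <= prob_below beta R1 (R2 - eta / 2) W P (outdist W P) n +
                  exp (- (Rpower (INR n) beta * (eta / 4)))).
  { intros n. replace (R2 - eta / 2) with (R2 - eta + 2 * (eta / 4)) by field.
    apply one_shot_achievability; auto; [apply HP | lra]. }
  destruct (choice _ HF) as [Phi HPhi].
  eapply leER_trans; [|apply sup_ub; exists Phi; split; [intros; apply HPhi|split; [|reflexivity]]].
  - apply liminf_ge_of_eventually. intros g Hg.
    apply (eventually_mono _ _ (ln2_decay beta g Hb Hg)). intros n Hn.
    destruct (HPhi n) as [_ [H _]]. lra.
  - apply limsup_le_of_eventually. intros g Hg.
    apply (eventually_mono _ _ (eventually_and _ _
      (Jp_eventually beta R2 R1 P (outdist W P) W HW HPd (g/2) ltac:(lra))
      (exp_decay beta (eta / 4) (g / 2) Hb ltac:(lra) ltac:(lra)))).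
    intros n [H1 H2]. destruct (HPhi n) as [_ [_ H3]].
    pose proof (pb_mono beta R1 (R2 - eta/2) R2 W P (outdist W P) n HW (HPd n) ltac:(lra)).
    rewrite Ip_is_Jp in HI. lra.
Qed.

Lemma sup_Jlim_eq_Ilim (R2 : R) (P : nat -> nat -> R) : (forall n, is_dist (P n)) ->
  supER (fun b => exists Q, is_dist_seq Q /\
          b = Fin (lim_down0 (fun gamma => Jp beta (R2 - gamma) R1 P Q W))) =
  Fin (Ilim R2 P).
Proof.
  intros HP. apply leER_antisym.
  - apply sup_least. intros x [Q [HQ ->]]. simpl.
    destruct (Ilim_spec R2 P HP) as [HL1 _].
    apply (lim_down0_monotone _ 1).
    + intros g1 g2 Hg. apply Jp_mono; auto. lra.
    + intros; apply Jp_range; auto.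
    + intros gm Hgm. eapply Rle_trans; [apply (Jp_le_Ip beta R1 W P Q _ (gm / 2)); auto; lra|].
      replace (R2 - gm + gm / 2) with (R2 - gm / 2) by field. apply HL1. lra.
  - apply sup_ub. exists (outdist W P). split; auto. apply outdist_seq; auto.
Qed.

Lemma inf_Jinf_eq_Iinf (eps : R) (P : nat -> nat -> R) : (forall n, is_dist (P n)) ->
  infER (fun b => exists Q, is_dist_seq Q /\ b = Jinf beta eps R1 P Q W) = Iinf beta eps R1 P W.
Proof.
  intros HP. apply leER_antisym.
  - apply inf_lb. exists (outdist W P). split; auto. apply outdist_seq; auto.
  - apply inf_greatest. intros x [Q [HQ ->]].
    apply sup_least. intros x [R2 [-> HR2]].
    apply Fin_leER_of_margin. intros g Hg. apply sup_ub. exists (R2 - g); split; auto.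
    eapply Rle_trans; [apply (Jp_le_Ip beta R1 W P Q _ (g / 2)); auto; lra|].
    eapply Rle_trans; [|exact HR2]. apply Jp_mono; auto. lra.
Qed.

Lemma Cp_formula (R2 : R) :
  Cp beta R2 R1 W c K = infER (fun a => exists P, in_Pc c K P /\ a = Fin (Ilim R2 P)).
Proof.
  apply leER_antisym.
  - apply inf_greatest. intros x [P [HP ->]].
    destruct (achievability_Cp R2 P HP) as [Phi [H1 [H2 H3]]].
    eapply leER_trans; [|exact H3]. apply inf_lb. exists Phi; auto.
  - apply inf_greatest. intros x [Phi [H1 [H2 ->]]].
    eapply leER_trans; [|apply (converse_Cp R2 Phi H1 H2)].
    apply inf_lb. exists (emp_seq Phi). split; [apply emp_seq_cost; auto | reflexivity].
Qed.

Lemma Cp_formula_Q (R2 : R) :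
  infER (fun a => exists P, in_Pc c K P /\ a = Fin (Ilim R2 P)) =
  infER (fun a => exists P, in_Pc c K P /\
           a = supER (fun b => exists Q, is_dist_seq Q /\
                 b = Fin (lim_down0 (fun gamma => Jp beta (R2 - gamma) R1 P Q W)))).
Proof.
  apply leER_antisym; apply inf_greatest; intros x [P [HP ->]].
  - rewrite (sup_Jlim_eq_Ilim R2 P (fun n => proj1 (HP n))). apply inf_lb. exists P; auto.
  - rewrite <- (sup_Jlim_eq_Ilim R2 P (fun n => proj1 (HP n))). apply inf_lb. exists P; auto.
Qed.

Lemma Ccap_formula (eps : R) :
  Ccap beta eps R1 W c K = supER (fun a => exists P, in_Pc c K P /\ a = Iinf beta eps R1 P W).
Proof.
  apply leER_antisym.
  - apply sup_least. intros x [Phi [H1 [H2 ->]]].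
    eapply leER_trans; [apply (converse_Ccap eps Phi H1 H2)|].
    apply sup_ub. exists (emp_seq Phi). split; auto. apply emp_seq_cost; auto.
  - apply sup_least. intros x [P [HP ->]].
    apply sup_least. intros x [R2 [-> HR2]].
    apply Fin_leER_of_margin. intros g Hg. apply (achievability_Ccap eps R2 g P HP HR2 Hg).
Qed.

Lemma Ccap_formula_Q (eps : R) :
  supER (fun a => exists P, in_Pc c K P /\ a = Iinf beta eps R1 P W) =
  supER (fun a => exists P, in_Pc c K P /\
           a = infER (fun b => exists Q, is_dist_seq Q /\ b = Jinf beta eps R1 P Q W)).
Proof.
  apply leER_antisym; apply sup_least; intros x [P [HP ->]].
  - rewrite <- (inf_Jinf_eq_Iinf eps P (fun n => proj1 (HP n))). apply sup_ub. exists P; auto.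
  - rewrite (inf_Jinf_eq_Iinf eps P (fun n => proj1 (HP n))). apply sup_ub. exists P; auto.
Qed.

End Capacity.

Theorem mainTheorem9 (beta : R) (hbeta : 0 < beta < 1)
  (W : nat -> nat -> nat -> R) (hW : is_channel W)
  (c : nat -> nat -> R) (K : R) (hK : forall n, exists x, in_cost c K n x)
  (R1 R2 : R) :
  (Cp beta R2 R1 W c K =
     infER (fun a => exists P, in_Pc c K P /\
              a = Fin (lim_down0 (fun gamma => Ip beta (R2 - gamma) R1 P W))) /\
   Cp beta R2 R1 W c K =
     infER (fun a => exists P, in_Pc c K P /\
              a = supER (fun b => exists Q, is_dist_seq Q /\
                    b = Fin (lim_down0 (fun gamma => Jp beta (R2 - gamma) R1 P Q W))))) /\
  (forall eps, 0 <= eps < 1 ->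
     Ccap beta eps R1 W c K = supER (fun a => exists P, in_Pc c K P /\ a = Iinf beta eps R1 P W) /\
     Ccap beta eps R1 W c K =
       supER (fun a => exists P, in_Pc c K P /\
                a = infER (fun b => exists Q, is_dist_seq Q /\ b = Jinf beta eps R1 P Q W))).
Proof.
  destruct hbeta as [Hb _].
  pose proof (Cp_formula beta W c K R1 Hb hW hK R2) as HCp.
  pose proof (Cp_formula_Q beta W c K R1 Hb hW R2) as HCpQ.
  split; [split|].
  - exact HCp.
  - rewrite HCp. exact HCpQ.
  - intros eps _.
    pose proof (Ccap_formula beta W c K R1 Hb hW hK eps) as HC.
    split; [exact HC|]. rewrite HC. exact (Ccap_formula_Q beta W c K R1 Hb hW eps).
Qed.
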